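(* Let $n\in(-1,1)$ and let $\mathcal{S}$ be a $C^2$-smooth rotationally symmetric, strictly convex sphere (i.e. $\mathcal{S}\in\mathscr{W}$) whose astigmatism satisfies $s/\sin^{n+2}\theta\in L^2_{\sin\theta}(0,\pi)$. Then, with coefficients $\gamma_{m,n}$ such that $$s=\gamma_{0,n}\sin^{2n+2}\theta+\sin^{n+2}\theta\sum_{m=1}^\infty\gamma_{m,n}\mathrm{P}^{-n}_{n+m}(\cos\theta)$$ (equality in $L^2_{\sin\theta}(0,\pi)$ after division by $\sin^{n+2}\theta$), the following hold pointwise: $$r_1=C_1+\frac{\gamma_{0,n}}{2(n+1)}\sin^{2n+2}\theta+\sin^{n+2}\theta\sum_{m=1}^\infty\gamma_{m,n}\left\{\mathrm{P}^{-(n+2)}_{n+m}(\cos\theta)+\cot\theta\,\mathrm{P}^{-(n+1)}_{n+m}(\cos\theta)\right\},$$ $$r=C_2\cos\theta+C_1+\gamma_{0,n}\left[\frac{\sin^{2n+2}\theta}{2(n+1)}-\cos\theta\int_0^\theta\sin^{2n+1}\vartheta\,d\vartheta\right]+\sin^{n+2}\theta\sum_{m=1}^\infty\gamma_{m,n}\mathrm{P}^{-(n+2)}_{n+m}(\cos\theta),$$ where $C_1=r_1(0)$ and $C_2=r(0)-r_1(0)$.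
   Context: $\mathscr{W}$ is the set of embedded $C^2$-smooth topological 2-spheres in $\mathbb{R}^3$ that are rotationally symmetric and strictly convex, parametrised by the inverse Gauss map with $\theta\in[0,\pi]$ the angle between the outward normal and the symmetry axis; with support function $r=\vec X\cdot\hat n$, radii of curvature $r_1=\frac{\cos^2\theta}{\sin\theta}\frac{d}{d\theta}(r/\cos\theta)$, $r_2=r''+r$, and astigmatism $s=r_2-r_1$. $\mathrm{P}^\mu_\nu$ denotes the (Ferrers) associated Legendre function of the first kind. $L^2_{\sin\theta}(0,\pi)$: complex-valued functions square integrable w.r.t. $\sin\theta\,d\theta$. The functions $\{\mathrm{P}^{-n}_{n+m}(\cos\theta)\}_{m\ge0}$ (with $\mathrm{P}^{-n}_n(\cos\theta)\propto\sin^n\theta$) form an orthogonal basis of $L^2_{\sin\theta}(0,\pi)$ for $n\in(-1,1)$. *)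

From Stdlib Require Import Reals Factorial.
From Coquelicot Require Import Coquelicot.
Open Scope R_scope.

(** Euler's Gamma function, for x > 0: Γ(x) = ∫_0^∞ t^(x-1) e^(-t) dt
    (improper Riemann integral; only used at arguments x > 0). *)
Definition Gamma (x : R) : R :=
  RInt_gen (fun t => Rpower t (x - 1) * exp (- t)) (at_right 0) (Rbar_locally p_infty).

Fixpoint poch (a : R) (k : nat) : R :=
  match k with
  | O => 1
  | S k' => poch a k' * (a + INR k')
  end.

(** Olver's regularized hypergeometric function
    F(a,b;c;z) = Σ_k (a)_k (b)_k / (Γ(c+k) k!) z^k   (used for c > 0, |z| < 1). *)
Definition hyp2F1_reg (a b c z : R) : R :=
  Series (fun k => poch a k * poch b k / (Gamma (c + INR k) * INR (fact k)) * z ^ k).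

(** Ferrers associated Legendre function of the first kind (DLMF 14.3.1):
    P^mu_nu(x) = ((1+x)/(1-x))^(mu/2) F(-nu, nu+1; 1-mu; (1-x)/2),  -1 < x < 1.
    (Used here only with mu = -n, -(n+1), -(n+2), n > -1, so 1 - mu > 0.) *)
Definition FerrersP (mu nu x : R) : R :=
  Rpower ((1 + x) / (1 - x)) (mu / 2) * hyp2F1_reg (- nu) (nu + 1) (1 - mu) ((1 - x) / 2).

Definition sinp (a t : R) : R := Rpower (sin t) a.

Definition cot (t : R) : R := cos t / sin t.

Definition D2 (r : R -> R) : R -> R := Derive (Derive r).

(** Radii of curvature of the surface with support function r(θ).
    r1 = cos^2θ/sinθ · d/dθ (r / cosθ) = r + r' cot θ for sin θ ≠ 0 (this is
    the formula of the paper with the removable singularity at θ = π/2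
    cancelled); at the poles (sin θ = 0) r1 is given its continuous value
    r + r'' (= r2 there, since r'(0) = r'(π) = 0). *)
Definition r1 (r : R -> R) (t : R) : R :=
  if Req_EM_T (sin t) 0 then r t + D2 r t else r t + Derive r t * cot t.

Definition r2 (r : R -> R) (t : R) : R := D2 r t + r t.

Definition astig (r : R -> R) (t : R) : R := r2 r t - r1 r t.

(** Membership in 𝒲, expressed through the support function r(θ) of the
    inverse-Gauss-map parametrisation.  r is the support function restricted
    to a meridian great circle of normals n(θ) = (sin θ, 0, cos θ), θ ∈ R:
    - C^2 smoothness: r is C^2 on R;
    - rotational symmetry / closedness: r is even and 2π-periodic;
    - strict convexity: both radii of curvature are positive on [0, π]. *)
Definition in_W (r : R -> R) : Prop :=
  (forall t, ex_derive r t) /\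
  (forall t, ex_derive (Derive r) t) /\
  (forall t, continuous (D2 r) t) /\
  (forall t, r (- t) = r t) /\
  (forall t, r (t + 2 * PI) = r t) /\
  (forall t, 0 <= t <= PI -> 0 < r1 r t /\ 0 < r2 r t).

(** f ∈ L^2_{sinθ}(0,π) for f continuous on (0,π): ∫_0^π f^2 sinθ dθ < ∞
    (improper Riemann integral of a nonnegative continuous integrand, which
    coincides with the Lebesgue integral). *)
Definition L2sin (f : R -> R) : Prop :=
  ex_RInt_gen (fun t => (f t) ^ 2 * sin t) (at_right 0) (at_left PI).

Definition L2sin_lim (g : nat -> R -> R) (f : R -> R) : Prop :=
  forall eps : R, 0 < eps -> exists N : nat, forall M : nat, (N <= M)%nat ->
    exists l : R,
      is_RInt_gen (fun t => (f t - g M t) ^ 2 * sin t) (at_right 0) (at_left PI) l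
      /\ l <= eps.

From Stdlib Require Import Reals Lra Lia Factorial.
From Coquelicot Require Import Coquelicot.
Open Scope R_scope.

(* Write s for the astigmatism and f = s / sin^(n+2).  On (0, pi) the functions r1 = r + r' cot
   and r' / sin have derivatives s cot and s / sin, so r1(t) - r1(0) and r'(t) / sin t - r''(0)
   are the integrals over (0, t] of f against the weights sin^(n+1) cos and sin^(n+1), and
   r = r1 - cos * r' / sin.  Both weights w satisfy w^2 / sin <= sin^(2n+1), which is integrable
   at 0 because n > -1, so by Cauchy-Schwarz the L^2_sin convergence of the expansion of f
   carries over to these weighted integrals.  The partial sums integrate term by term thanks to
   d/dt [sin^a t P^(-a)_nu(cos t)] = sin^a t P^(-(a-1))_nu(cos t), which follows from the
   hypergeometric series of P^(-a)_nu, its contiguous relation in the third parameter, and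
   Gamma(y + 1) = y Gamma(y). *)

Lemma ex_derive_continuous_R (f : R -> R) x : ex_derive f x -> continuous f x.
Proof. exact (ex_derive_continuous (K := R_AbsRing) (V := R_NormedModule) f x). Qed.

Lemma continuous_Rplus_fun (f g : R -> R) x :
  continuous f x -> continuous g x -> continuous (fun y => f y + g y) x.
Proof. apply (continuous_plus (K := R_AbsRing) (V := R_NormedModule)). Qed.

Lemma continuous_Rminus_fun (f g : R -> R) x :
  continuous f x -> continuous g x -> continuous (fun y => f y - g y) x.
Proof.
  intros Hf Hg. apply continuous_Rplus_fun; auto.
  now apply (continuous_opp (K := R_AbsRing) (V := R_NormedModule)).
Qed.

Lemma continuous_Rmult_fun (f g : R -> R) x :
  continuous f x -> continuous g x -> continuous (fun y => f y * g y) x.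
Proof. apply (continuous_mult (K := R_AbsRing)). Qed.

Lemma continuous_Rinv_fun (f : R -> R) x :
  continuous f x -> f x <> 0 -> continuous (fun y => / f y) x.
Proof.
  intros Hf Hn. apply (continuous_comp f Rinv); auto.
  apply ex_derive_continuous_R. auto_derive. auto.
Qed.

Lemma is_derive_Rmult_fun (f g : R -> R) x df dg :
  is_derive f x df -> is_derive g x dg ->
  is_derive (fun t => f t * g t) x (df * g x + f x * dg).
Proof. intros Hf Hg. exact (is_derive_mult f g x df dg Hf Hg Rmult_comm). Qed.

Lemma at_right_le_locally (x : R) : filter_le (at_right x) (locally x).
Proof. intros P [eps HP]. exists eps. intros y Hy _. now apply HP. Qed.

Lemma filterlim_at_right_of_continuous (f : R -> R) x :
  continuous f x -> filterlim f (at_right x) (locally (f x)).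
Proof. intros Hf. eapply filterlim_filter_le_1; [apply at_right_le_locally | exact Hf]. Qed.

Lemma at_right_0_below (b : R) : 0 < b -> at_right 0 (fun y => 0 < y < b).
Proof.
  intros Hb. exists (mkposreal b Hb). intros y Hy Hy0. change (Rabs (y - 0) < b) in Hy.
  rewrite Rminus_0_r in Hy. apply Rabs_def2 in Hy. lra.
Qed.

Lemma locally_open_interval (a b x : R) : a < x < b -> locally x (fun y => a < y < b).
Proof.
  intros Hx. assert (He : 0 < Rmin (x - a) (b - x)) by (apply Rmin_pos; lra).
  exists (mkposreal _ He). intros y Hy. change (Rabs (y - x) < Rmin (x - a) (b - x)) in Hy.
  apply Rabs_def2 in Hy. generalize (Rmin_l (x - a) (b - x)) (Rmin_r (x - a) (b - x)). lra.
Qed.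

Lemma filter_prod_at_right_0_at_point (t : R) (Q : R -> R -> Prop) : 0 < t ->
  (forall a, 0 < a < t -> Q a t) ->
  filter_prod (at_right 0) (at_point t) (fun ab => Q (fst ab) (snd ab)).
Proof.
  intros Ht HQ. apply Filter_prod with (fun a => 0 < a < t) (fun b => b = t).
  - now apply at_right_0_below.
  - reflexivity.
  - intros x y Hx Hy. subst. now apply HQ.
Qed.

Lemma filterlim_Rplus_fun (T : Type) (F : (T -> Prop) -> Prop) {FF : Filter F} (f g : T -> R) a b :
  filterlim f F (locally a) -> filterlim g F (locally b) ->
  filterlim (fun x => f x + g x) F (locally (a + b)).
Proof.
  intros Hf Hg. eapply filterlim_comp_2; [exact Hf | exact Hg |].
  apply (filterlim_plus (K := R_AbsRing) (V := R_NormedModule)).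
Qed.

Lemma filterlim_Rmult_fun (T : Type) (F : (T -> Prop) -> Prop) {FF : Filter F} (f g : T -> R) a b :
  filterlim f F (locally a) -> filterlim g F (locally b) ->
  filterlim (fun x => f x * g x) F (locally (a * b)).
Proof.
  intros Hf Hg. eapply filterlim_comp_2; [exact Hf | exact Hg |].
  apply (filterlim_mult (K := R_AbsRing)).
Qed.

Lemma filterlim_plus_0 (T : Type) (F : (T -> Prop) -> Prop) {FF : Filter F} (f g : T -> R) :
  filterlim f F (locally 0) -> filterlim g F (locally 0) ->
  filterlim (fun x => f x + g x) F (locally 0).
Proof. intros Hf Hg. rewrite <- (Rplus_0_l 0). now apply filterlim_Rplus_fun. Qed.

Lemma filterlim_mult_0 (T : Type) (F : (T -> Prop) -> Prop) {FF : Filter F} (f g : T -> R) a :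
  filterlim f F (locally a) -> filterlim g F (locally 0) ->
  filterlim (fun x => f x * g x) F (locally 0).
Proof. intros Hf Hg. rewrite <- (Rmult_0_r a). now apply filterlim_Rmult_fun. Qed.

Lemma filterlim_scal_0 (T : Type) (F : (T -> Prop) -> Prop) {FF : Filter F} (f : T -> R) c :
  filterlim f F (locally 0) -> filterlim (fun x => c * f x) F (locally 0).
Proof.
  intros Hf. apply (filterlim_mult_0 T F (fun _ => c) f c); [apply filterlim_const | exact Hf].
Qed.

Lemma filterlim_squeeze_0 (T : Type) (F : (T -> Prop) -> Prop) {FF : Filter F} (f g : T -> R) :
  filterlim g F (locally 0) -> F (fun x => Rabs (f x) <= g x) -> filterlim f F (locally 0).
Proof.
  intros Hg Hb P [eps HP]. unfold filtermap.
  assert (Hge := Hg (fun y => Rabs (y - 0) < eps) (locally_ball 0 eps)).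
  unfold filtermap in Hge. generalize (filter_and _ _ Hge Hb). apply filter_imp.
  intros x [H1 H2]. apply HP. change (Rabs (f x - 0) < eps). change (Rabs (g x - 0) < eps) in H1.
  rewrite Rminus_0_r in *. generalize (Rle_abs (g x)). lra.
Qed.

Lemma is_RInt_gen_closed (Fa Fb : (R -> Prop) -> Prop) {FFa : ProperFilter Fa}
  {FFb : ProperFilter Fb} (f : R -> R) (P : R -> Prop) (L : R) :
  closed P -> is_RInt_gen f Fa Fb L ->
  filter_prod Fa Fb (fun ab => forall I, is_RInt f (fst ab) (snd ab) I -> P I) -> P L.
Proof.
  intros HP HI HB. apply HP. intros Hnear.
  assert (H1 := HI _ Hnear). unfold filtermapi in H1.
  assert (Hp : ProperFilter' (filter_prod Fa Fb)).
  { apply filter_prod_proper'; apply Proper_StrongProper; auto. }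
  apply (filter_not_empty (F := filter_prod Fa Fb)).
  generalize (filter_and _ _ H1 HB). apply filter_imp.
  intros x [[y [Hy1 Hy2]] H2]. exact (Hy2 (H2 y Hy1)).
Qed.

Lemma ex_RInt_continuous_R (f : R -> R) (a b : R) :
  (forall z, Rmin a b <= z <= Rmax a b -> continuous f z) -> ex_RInt f a b.
Proof. apply (ex_RInt_continuous (V := R_CompleteNormedModule)). Qed.

Lemma ex_RInt_continuous_on (f : R -> R) (c d a b : R) :
  c < a <= b -> b < d -> (forall x, c < x < d -> continuous f x) -> ex_RInt f a b.
Proof.
  intros Ha Hb Hf. apply ex_RInt_continuous_R. intros z.
  rewrite Rmin_left, Rmax_right by lra. intros Hz. apply Hf. lra.
Qed.

Lemma RInt_le_is_RInt_gen (Fb : (R -> Prop) -> Prop) {FFb : ProperFilter Fb}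
  (h : R -> R) (a b c L : R) :
  0 < a <= b -> Fb (fun y => b <= y < c) ->
  (forall x, 0 < x < c -> continuous h x) -> (forall x, 0 < x < c -> 0 <= h x) ->
  is_RInt_gen h (at_right 0) Fb L -> RInt h a b <= L.
Proof.
  intros Hab Hc Hh Hpos HL.
  apply (is_RInt_gen_closed (at_right 0) Fb h _ L (closed_ge _) HL).
  apply Filter_prod with (fun x => 0 < x < a) (fun y => b <= y < c).
  - apply at_right_0_below. lra.
  - exact Hc.
  - intros x y Hx Hy I HI. simpl in HI. rewrite <- (is_RInt_unique _ _ _ _ HI).
    assert (E1 : ex_RInt h x a) by (apply (ex_RInt_continuous_on h 0 c); auto; lra).
    assert (E2 : ex_RInt h a b) by (apply (ex_RInt_continuous_on h 0 c); auto; lra).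
    assert (E3 : ex_RInt h b y) by (apply (ex_RInt_continuous_on h 0 c); auto; lra).
    rewrite <- (RInt_Chasles h x a y E1 (ex_RInt_Chasles _ _ _ _ E2 E3)).
    rewrite <- (RInt_Chasles h a b y E2 E3).
    assert (0 <= RInt h x a) by (apply RInt_ge_0; [lra | exact E1 | intros; apply Hpos; lra]).
    assert (0 <= RInt h b y) by (apply RInt_ge_0; [lra | exact E3 | intros; apply Hpos; lra]).
    change (RInt h a b <= RInt h x a + (RInt h a b + RInt h b y)). lra.
Qed.

Lemma is_RInt_gen_ge_0 (Fb : (R -> Prop) -> Prop) {FFb : ProperFilter Fb} (h : R -> R) (b c L : R) :
  0 < b -> Fb (fun y => b <= y < c) ->
  (forall x, 0 < x < c -> continuous h x) -> (forall x, 0 < x < c -> 0 <= h x) ->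
  is_RInt_gen h (at_right 0) Fb L -> 0 <= L.
Proof.
  intros Hb Hc Hh Hpos HL.
  change 0 with (@zero R_CompleteNormedModule). rewrite <- (RInt_point b h).
  apply (RInt_le_is_RInt_gen Fb h b b c); auto. lra.
Qed.

Lemma at_left_above (b c : R) : b < c -> at_left c (fun y => b <= y < c).
Proof.
  intros Hbc. exists (mkposreal (c - b) ltac:(lra)). intros y Hy Hy0.
  change (Rabs (y - c) < c - b) in Hy. apply Rabs_def2 in Hy. lra.
Qed.

Lemma Rabs_is_RInt_gen_le (h : R -> R) (L B t : R) : 0 < t ->
  (forall a, 0 < a < t -> Rabs (RInt h a t) <= B) ->
  is_RInt_gen h (at_right 0) (at_point t) L -> Rabs L <= B.
Proof.
  intros Ht HB HL. apply Rabs_le. split.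
  - apply (is_RInt_gen_closed _ _ h _ L (closed_ge _) HL).
    apply (filter_prod_at_right_0_at_point t
      (fun a b => forall I, is_RInt h a b I -> - B <= I)); auto.
    intros a Ha I HI. rewrite <- (is_RInt_unique _ _ _ _ HI).
    specialize (HB a Ha). apply Rabs_le_between in HB. lra.
  - apply (is_RInt_gen_closed _ _ h _ L (closed_le _) HL).
    apply (filter_prod_at_right_0_at_point t
      (fun a b => forall I, is_RInt h a b I -> I <= B)); auto.
    intros a Ha I HI. rewrite <- (is_RInt_unique _ _ _ _ HI).
    specialize (HB a Ha). apply Rabs_le_between in HB. lra.
Qed.

Lemma is_RInt_gen_ext_on (f g : R -> R) (c t l : R) : 0 < t < c ->
  (forall x, 0 < x < c -> f x = g x) ->
  is_RInt_gen f (at_right 0) (at_point t) l -> is_RInt_gen g (at_right 0) (at_point t) l.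
Proof.
  intros Ht He. apply is_RInt_gen_ext.
  apply (filter_prod_at_right_0_at_point t
    (fun a b => forall x, Rmin a b < x < Rmax a b -> f x = g x)); [lra|].
  intros a Ha x Hx. rewrite Rmin_left, Rmax_right in Hx by lra. apply He. lra.
Qed.

Lemma is_RInt_gen_at_right_0_of_derive (F f : R -> R) (c t l0 : R) : 0 < t < c ->
  (forall x, 0 < x < c -> is_derive F x (f x)) ->
  (forall x, 0 < x < c -> continuous f x) ->
  filterlim F (at_right 0) (locally l0) ->
  is_RInt_gen f (at_right 0) (at_point t) (F t - l0).
Proof.
  intros Ht HD HC Hl.
  assert (HDF : forall x, 0 < x < c -> Derive F x = f x)
    by (intros; now apply is_derive_unique, HD).
  apply (is_RInt_gen_ext_on (Derive F) f c); auto.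
  apply is_RInt_gen_Derive.
  - apply (filter_prod_at_right_0_at_point t
      (fun a b => forall x, Rmin a b <= x <= Rmax a b -> ex_derive F x)); [lra|].
    intros a Ha x Hx. rewrite Rmin_left, Rmax_right in Hx by lra. eexists. apply HD. lra.
  - apply (filter_prod_at_right_0_at_point t
      (fun a b => forall x, Rmin a b <= x <= Rmax a b -> continuous (Derive F) x)); [lra|].
    intros a Ha x Hx. rewrite Rmin_left, Rmax_right in Hx by lra.
    apply continuous_ext_loc with f; [| apply HC; lra].
    generalize (locally_open_interval 0 c x ltac:(lra)). apply filter_imp.
    intros y Hy. symmetry. now apply HDF.
  - exact Hl.
  - intros P HP. exact (locally_singleton _ _ HP).
Qed.

Lemma interval_between_cover (u v T x : R) : Rmin u v <= x <= Rmax u v ->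
  Rmin u T <= x <= Rmax u T \/ Rmin v T <= x <= Rmax v T.
Proof.
  unfold Rmin, Rmax. intros Hx.
  destruct (Rle_dec u v), (Rle_dec u T), (Rle_dec v T), (Rle_dec x T); (left; lra) || (right; lra).
Qed.

Section Dominated.
Variables (h g G : R -> R).
Let dominated_on (u v : R) := forall x, Rmin u v <= x <= Rmax u v ->
  0 <= h x <= g x /\ is_derive G x (g x) /\ continuous h x /\ continuous g x.

Lemma RInt_bounds_primitive (u v : R) : u <= v -> dominated_on u v ->
  0 <= RInt h u v <= G v - G u.
Proof.
  intros Huv Hin. unfold dominated_on in Hin. rewrite Rmin_left, Rmax_right in Hin by lra.
  assert (exh : ex_RInt h u v) by (apply ex_RInt_continuous_R;
    rewrite Rmin_left, Rmax_right by lra; intros; apply Hin; lra).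
  assert (exg : ex_RInt g u v) by (apply ex_RInt_continuous_R;
    rewrite Rmin_left, Rmax_right by lra; intros; apply Hin; lra).
  assert (HG : RInt g u v = G v - G u).
  { apply is_RInt_unique, (is_RInt_derive G g); rewrite Rmin_left, Rmax_right by lra;
      intros; apply Hin; lra. }
  rewrite <- HG. split; [apply RInt_ge_0 | apply RInt_le]; auto; intros; apply Hin; lra.
Qed.

Lemma Rabs_RInt_le_primitive (u v : R) : dominated_on u v ->
  Rabs (RInt h u v) <= Rabs (G v - G u).
Proof.
  intros Hin. destruct (Rle_dec u v) as [Huv|Hvu].
  - destruct (RInt_bounds_primitive u v Huv Hin). rewrite !Rabs_pos_eq; lra.
  - assert (Hin' : dominated_on v u).
    { intros x Hx. apply Hin. now rewrite Rmin_comm, Rmax_comm. }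
    destruct (RInt_bounds_primitive v u ltac:(lra) Hin').
    rewrite <- opp_RInt_swap, Rabs_Ropp, <- (Rabs_Ropp (G v - G u)), Ropp_minus_distr.
    + rewrite !Rabs_pos_eq; lra.
    + apply ex_RInt_continuous_R. intros z Hz. apply (Hin' z Hz).
Qed.

Lemma ex_is_RInt_gen_dominated (Fa : (R -> Prop) -> Prop) {FFa : ProperFilter Fa} (T lG : R) :
  Fa (fun a => dominated_on a T) -> filterlim G Fa (locally lG) ->
  exists L, is_RInt_gen h Fa (at_point T) L.
Proof.
  intros HP HG.
  assert (exRI : forall a b, dominated_on a b -> ex_RInt h a b).
  { intros a b Hab. apply ex_RInt_continuous_R. intros z Hz. apply (Hab z Hz). }
  assert (Hc : exists L, filterlim (fun a => RInt h a T) Fa (locally L)).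
  { apply (filterlim_locally_cauchy (F := Fa)). intros eps.
    assert (HGe := HG (fun y => Rabs (y - lG) < eps / 2) (locally_ball lG (pos_div_2 eps))).
    exists (fun a => dominated_on a T /\ Rabs (G a - lG) < eps / 2).
    split; [now apply filter_and|].
    intros u v [Pu Gu] [Pv Gv].
    assert (Huv : dominated_on u v).
    { intros x Hx. destruct (interval_between_cover u v T x Hx); [apply Pu | apply Pv]; auto. }
    change (Rabs (RInt h v T - RInt h u T) < eps).
    rewrite <- (RInt_Chasles h u v T) by auto.
    change (Rabs (RInt h v T - (RInt h u v + RInt h v T)) < eps).
    replace (RInt h v T - (RInt h u v + RInt h v T)) with (- RInt h u v) by ring.
    rewrite Rabs_Ropp. eapply Rle_lt_trans; [now apply Rabs_RInt_le_primitive|].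
    replace (G v - G u) with ((G v - lG) - (G u - lG)) by ring.
    eapply Rle_lt_trans; [apply Rabs_triang|]. rewrite Rabs_Ropp. lra. }
  destruct Hc as [L HL]. exists L. intros S HS.
  apply Filter_prod with (fun a => dominated_on a T /\ S (RInt h a T)) (fun b => b = T).
  - now apply filter_and; [| apply HL].
  - reflexivity.
  - intros x y [Hx1 Hx2] Hy. subst. exists (RInt h x T). split; auto.
    now apply (RInt_correct (V := R_CompleteNormedModule)), exRI.
Qed.

End Dominated.

Lemma RInt_Cauchy_Schwarz (p q w : R -> R) a b : a <= b ->
  ex_RInt p a b -> ex_RInt q a b -> ex_RInt w a b ->
  (forall x, a < x < b -> 0 <= p x) ->
  (forall x l, a < x < b -> 0 <= l * l * p x + 2 * l * q x + w x) ->
  (RInt q a b) ^ 2 <= RInt p a b * RInt w a b.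
Proof.
  intros Hab Hp Hq Hw Hp0 Hquad.
  assert (Hcomb : forall l, 0 <= l * l * RInt p a b + 2 * l * RInt q a b + RInt w a b).
  { intros l.
    assert (H1 := is_RInt_scal _ a b (l * l) _ (RInt_correct _ _ _ Hp)).
    assert (H2 := is_RInt_scal _ a b (2 * l) _ (RInt_correct _ _ _ Hq)).
    assert (H3 := is_RInt_plus _ _ a b _ _ (is_RInt_plus _ _ a b _ _ H1 H2)
      (RInt_correct _ _ _ Hw)).
    assert (E := is_RInt_unique _ _ _ _ H3).
    unfold plus, scal in E; simpl in E; unfold mult in E; simpl in E.
    rewrite <- E. apply RInt_ge_0; [exact Hab | eexists; exact H3 |].
    intros x Hx. unfold plus, scal; simpl; unfold mult; simpl. now apply Hquad. }
  assert (HP : 0 <= RInt p a b) by (apply RInt_ge_0; auto).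
  revert Hcomb HP. generalize (RInt p a b : R) (RInt q a b : R) (RInt w a b : R).
  intros P Q W Hcomb HP.
  destruct HP as [HP|HP].
  - specialize (Hcomb (- Q / P)).
    replace (- Q / P * (- Q / P) * P + 2 * (- Q / P) * Q + W) with (W - Q ^ 2 / P) in Hcomb
      by (field; lra).
    apply Rmult_le_reg_r with (/ P); [now apply Rinv_0_lt_compat|].
    replace (P * W * / P) with W by (field; lra). unfold Rdiv in Hcomb. lra.
  - rewrite <- HP in *. destruct (Req_dec Q 0) as [E|E]; [rewrite E; lra|].
    specialize (Hcomb (- (W + 1) / (2 * Q))).
    replace (- (W + 1) / (2 * Q) * (- (W + 1) / (2 * Q)) * 0 + 2 * (- (W + 1) / (2 * Q)) * Q + W)
      with (-1) in Hcomb by (field; auto). lra.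
Qed.

Lemma sin_pos_0_PI x : 0 < x < PI -> 0 < sin x.
Proof. intros; apply sin_gt_0; lra. Qed.

Lemma Rabs_is_RInt_gen_weighted_le (d w : R -> R) (t l K L : R) : 0 < t < PI ->
  (forall x, 0 < x < PI -> continuous d x) -> (forall x, 0 < x < PI -> continuous w x) ->
  (forall a, 0 < a < t -> RInt (fun x => w x ^ 2 / sin x) a t <= K) ->
  is_RInt_gen (fun x => d x ^ 2 * sin x) (at_right 0) (at_left PI) l ->
  is_RInt_gen (fun x => d x * w x) (at_right 0) (at_point t) L ->
  Rabs L <= sqrt (l * K).
Proof.
  intros Ht Hd Hw HK Hl HL.
  apply (Rabs_is_RInt_gen_le (fun x => d x * w x) L _ t); [lra | | exact HL].
  intros a Ha.
  set (p := fun x => d x ^ 2 * sin x). set (q := fun x => d x * w x).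
  set (v := fun x => w x ^ 2 / sin x).
  assert (Hpc : forall x, 0 < x < PI -> continuous p x).
  { intros x Hx. apply continuous_Rmult_fun; [| apply continuous_sin].
    apply continuous_Rmult_fun; auto. apply continuous_Rmult_fun; auto. apply continuous_const. }
  assert (Hqc : forall x, 0 < x < PI -> continuous q x)
    by (intros; apply continuous_Rmult_fun; auto).
  assert (Hvc : forall x, 0 < x < PI -> continuous v x).
  { intros x Hx. apply continuous_Rmult_fun.
    - apply continuous_Rmult_fun; auto. apply continuous_Rmult_fun; auto. apply continuous_const.
    - apply continuous_Rinv_fun; [apply continuous_sin | generalize (sin_pos_0_PI x Hx); lra]. }
  assert (Hp0 : forall x, 0 < x < PI -> 0 <= p x)
    by (intros; apply Rmult_le_pos; [apply pow2_ge_0 | left; now apply sin_pos_0_PI]).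
  assert (Hv0 : forall x, 0 < x < PI -> 0 <= v x)
    by (intros; apply Rdiv_le_0_compat; [apply pow2_ge_0 | now apply sin_pos_0_PI]).
  assert (Hcs : (RInt q a t) ^ 2 <= RInt p a t * RInt v a t).
  { apply RInt_Cauchy_Schwarz; try (apply (ex_RInt_continuous_on _ 0 PI); auto; lra); [lra | |].
    - intros x Hx. apply Hp0. lra.
    - intros x lam Hx. assert (Hs := sin_pos_0_PI x ltac:(lra)).
      replace (lam * lam * p x + 2 * lam * q x + v x)
        with ((lam * d x * sin x + w x) ^ 2 * / sin x) by (unfold p, q, v; field; lra).
      apply Rmult_le_pos; [apply pow2_ge_0 | left; now apply Rinv_0_lt_compat]. }
  assert (Hpl : RInt p a t <= l) by (apply (RInt_le_is_RInt_gen (at_left PI) p a t PI);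
    auto; [lra | apply at_left_above; lra]).
  assert (Hp : 0 <= RInt p a t)
    by (apply RInt_ge_0; [lra | apply (ex_RInt_continuous_on _ 0 PI); auto; lra |
        intros; apply Hp0; lra]).
  assert (Hv : 0 <= RInt v a t)
    by (apply RInt_ge_0; [lra | apply (ex_RInt_continuous_on _ 0 PI); auto; lra |
        intros; apply Hv0; lra]).
  assert (Hpv : RInt p a t * RInt v a t <= l * K) by (apply Rmult_le_compat; auto).
  rewrite <- sqrt_Rsqr_abs. apply sqrt_le_1_alt. unfold Rsqr. simpl in Hcs. lra.
Qed.

Lemma is_lim_seq_weighted_RInt_gen (f : R -> R) (g : nat -> R -> R) (w : R -> R) (t Lf K : R)
  (Lg : nat -> R) :
  0 < t < PI -> 0 <= K ->
  (forall x, 0 < x < PI -> continuous f x) ->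
  (forall M x, 0 < x < PI -> continuous (g M) x) ->
  (forall x, 0 < x < PI -> continuous w x) ->
  (forall a, 0 < a < t -> RInt (fun x => w x ^ 2 / sin x) a t <= K) ->
  L2sin_lim g f ->
  is_RInt_gen (fun x => f x * w x) (at_right 0) (at_point t) Lf ->
  (forall M, is_RInt_gen (fun x => g M x * w x) (at_right 0) (at_point t) (Lg M)) ->
  is_lim_seq Lg Lf.
Proof.
  intros Ht HK Hf Hg Hw HKb HL2 HLf HLg.
  apply is_lim_seq_spec. intros eps. assert (Hep := cond_pos eps).
  set (e' := eps * eps / (K + 1)).
  assert (He' : 0 < e') by (unfold e'; apply Rdiv_lt_0_compat; nra).
  destruct (HL2 e' He') as [N HN]. exists N. intros M HM.
  destruct (HN M HM) as [l [Hl Hle]].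
  assert (HD : is_RInt_gen (fun x => (f x - g M x) * w x) (at_right 0) (at_point t) (Lf - Lg M)).
  { apply (is_RInt_gen_ext_on (fun x => minus (f x * w x) (g M x * w x)) _ PI); auto.
    - intros x _. unfold minus, plus, opp; simpl. ring.
    - exact (is_RInt_gen_minus _ _ _ _ HLf (HLg M)). }
  assert (Hdc : forall x, 0 < x < PI -> continuous (fun x => f x - g M x) x)
    by (intros; apply continuous_Rminus_fun; auto).
  assert (Hbound := Rabs_is_RInt_gen_weighted_le _ w t l K _ Ht Hdc Hw HKb Hl HD).
  assert (HlK : l * K < eps * eps).
  { apply Rle_lt_trans with (e' * K); [now apply Rmult_le_compat_r|].
    unfold e'. apply Rmult_lt_reg_r with (K + 1); [lra|].
    replace (eps * eps / (K + 1) * K * (K + 1)) with (eps * eps * K) by (field; lra). nra. }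
  assert (Hsq : sqrt (l * K) < eps).
  { destruct (Rle_lt_dec (l * K) 0) as [Hneg|HlK0]; [rewrite sqrt_neg_0 by exact Hneg; exact Hep|].
    rewrite <- (sqrt_square eps) by lra. apply sqrt_lt_1_alt. lra. }
  change (Rabs (Lg M - Lf) < eps). rewrite Rabs_minus_sym. lra.
Qed.

Lemma Rpower_pos x a : 0 < Rpower x a.
Proof. apply exp_pos. Qed.

Lemma is_derive_Rpower_base x a : 0 < x -> is_derive (fun u => Rpower u a) x (a * Rpower x (a - 1)).
Proof. intros Hx. apply is_derive_Reals. now apply derivable_pt_lim_power. Qed.

Lemma continuous_Rpower_base x a : 0 < x -> continuous (fun u => Rpower u a) x.
Proof. intros Hx. apply ex_derive_continuous_R. eexists. now apply is_derive_Rpower_base. Qed.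

Lemma Rpower_le_1 x a : 0 < x <= 1 -> 0 <= a -> Rpower x a <= 1.
Proof.
  intros Hx Ha. assert (E : Rpower 1 a = 1) by (unfold Rpower; now rewrite ln_1, Rmult_0_r, exp_0).
  rewrite <- E. now apply Rle_Rpower_l.
Qed.

Lemma Rpower_at_right_0 a : 0 < a -> filterlim (fun u => Rpower u a) (at_right 0) (locally 0).
Proof.
  intros Ha P [eps HP]. exists (mkposreal _ (Rpower_pos eps (/ a))). intros y Hy Hy0.
  apply HP. change (Rabs (Rpower y a - 0) < eps). change (Rabs (y - 0) < Rpower eps (/ a)) in Hy.
  rewrite Rminus_0_r, Rabs_pos_eq in * by (try left; auto using Rpower_pos).
  replace (pos eps) with (Rpower (Rpower eps (/ a)) a).
  - apply Rlt_Rpower_l; auto.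
  - rewrite Rpower_mult, Rinv_l, Rpower_1 by (try lra; apply cond_pos). reflexivity.
Qed.

Lemma exp_monotone x y : x <= y -> exp x <= exp y.
Proof. intros [H|<-]; [left; now apply exp_increasing | right; reflexivity]. Qed.

Lemma Rpower_le_exp_half p : exists K, 0 < K /\ forall t, 1 <= t -> Rpower t p <= K * exp (t / 2).
Proof.
  set (c := Rabs p + 1). assert (Hc : 0 < c) by (unfold c; generalize (Rabs_pos p); lra).
  exists (exp (c * (ln (2 * c) - 1))). split; [apply exp_pos|].
  intros t Ht. rewrite <- exp_plus. unfold Rpower. apply exp_monotone.
  assert (Hlt : 0 <= ln t)
    by (rewrite <- ln_1; destruct Ht as [Ht|<-]; [left; apply ln_increasing | right]; lra).
  (* ln u <= u - 1 at u = t / (2c) *)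
  assert (Hl : ln t <= t / (2 * c) - 1 + ln (2 * c)).
  { replace (ln t) with (ln (t / (2 * c)) + ln (2 * c)).
    - generalize (exp_ineq1_le (ln (t / (2 * c)))). rewrite exp_ln; [lra|].
      apply Rdiv_lt_0_compat; lra.
    - unfold Rdiv. rewrite ln_mult, ln_Rinv by (try apply Rinv_0_lt_compat; lra). ring. }
  assert (Hpl : p * ln t <= c * ln t)
    by (apply Rmult_le_compat_r; auto; unfold c; generalize (Rle_abs p); lra).
  apply Rmult_le_compat_l with (r := c) in Hl; [|lra].
  replace (c * (t / (2 * c) - 1 + ln (2 * c))) with (c * (ln (2 * c) - 1) + t / 2) in Hl
    by (field; lra).
  lra.
Qed.

Lemma exp_neg_half_at_infty : filterlim (fun t => exp (- t / 2)) (Rbar_locally p_infty) (locally 0).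
Proof.
  intros P [eps HP]. exists (- 2 * ln eps). intros x Hx. apply HP.
  change (Rabs (exp (- x / 2) - 0) < eps). rewrite Rminus_0_r, Rabs_pos_eq by (left; apply exp_pos).
  rewrite <- (exp_ln eps) by apply cond_pos. apply exp_increasing. lra.
Qed.

Lemma exp_neg_le_1 x : 0 <= x -> exp (- x) <= 1.
Proof. intros Hx. rewrite <- exp_0. apply exp_monotone. lra. Qed.

Lemma Rpower_exp_neg_le_exp_half p : exists K, 0 < K /\
  forall t, 1 <= t -> Rpower t p * exp (- t) <= K * exp (- t / 2).
Proof.
  destruct (Rpower_le_exp_half p) as [K [HK HKb]]. exists K. split; auto.
  intros t Ht. replace (- t / 2) with (t / 2 + - t) by field. rewrite exp_plus, <- Rmult_assoc.
  apply Rmult_le_compat_r; [left; apply exp_pos | now apply HKb].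
Qed.

Definition Gamma_integrand (y t : R) := Rpower t (y - 1) * exp (- t).

Lemma continuous_Gamma_integrand y x : 0 < x -> continuous (Gamma_integrand y) x.
Proof.
  intros Hx. apply ex_derive_continuous_R. unfold Gamma_integrand, Rpower. auto_derive. auto.
Qed.

Lemma Gamma_integrand_pos y x : 0 < Gamma_integrand y x.
Proof. apply Rmult_lt_0_compat; [apply Rpower_pos | apply exp_pos]. Qed.

Lemma ex_Gamma_integral_0_1 y : 0 < y ->
  exists L, is_RInt_gen (Gamma_integrand y) (at_right 0) (at_point 1) L.
Proof.
  intros Hy.
  apply (ex_is_RInt_gen_dominated (Gamma_integrand y) (fun t => Rpower t (y - 1))
    (fun t => / y * Rpower t y) (at_right 0) 1 0).
  - apply (filter_imp (fun a => 0 < a < 1)); [| apply at_right_0_below; lra].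
    intros a Ha x Hx. rewrite Rmin_left, Rmax_right in Hx by lra.
    split; [split | split; [| split]].
    + left. apply Gamma_integrand_pos.
    + unfold Gamma_integrand. rewrite <- (Rmult_1_r (Rpower x (y - 1))) at 2.
      apply Rmult_le_compat_l; [left; apply Rpower_pos | apply exp_neg_le_1; lra].
    + replace (Rpower x (y - 1)) with (/ y * (y * Rpower x (y - 1))) by (field; lra).
      apply is_derive_scal, is_derive_Rpower_base. lra.
    + apply continuous_Gamma_integrand. lra.
    + apply continuous_Rpower_base. lra.
  - refine (filterlim_scal_0 _ _ _ _ _). now apply Rpower_at_right_0.
Qed.

Lemma ex_Gamma_integral_1_infty y :
  exists L, is_RInt_gen (Gamma_integrand y) (Rbar_locally p_infty) (at_point 1) L.
Proof.
  destruct (Rpower_exp_neg_le_exp_half (y - 1)) as [K [HK HKb]].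
  apply (ex_is_RInt_gen_dominated (Gamma_integrand y) (fun t => K * exp (- t / 2))
    (fun t => - 2 * K * exp (- t / 2)) (Rbar_locally p_infty) 1 0).
  - exists 1. intros a Ha x Hx. rewrite Rmin_right, Rmax_left in Hx by lra.
    split; [split | split; [| split]].
    + left. apply Gamma_integrand_pos.
    + apply HKb. lra.
    + auto_derive; [auto | unfold Rdiv; field].
    + apply continuous_Gamma_integrand. lra.
    + apply ex_derive_continuous_R. auto_derive. auto.
  - apply (filterlim_ext (fun t => (- 2 * K) * exp (- t / 2))); [intros; ring|].
    exact (filterlim_scal_0 _ _ _ _ exp_neg_half_at_infty).
Qed.

Lemma ex_Gamma_integral y : 0 < y ->
  exists L, is_RInt_gen (Gamma_integrand y) (at_right 0) (Rbar_locally p_infty) L.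
Proof.
  intros Hy. destruct (ex_Gamma_integral_0_1 y Hy) as [L1 H1].
  destruct (ex_Gamma_integral_1_infty y) as [L2 H2].
  exists (plus L1 (opp L2)). apply (is_RInt_gen_Chasles _ 1 L1 (opp L2) H1).
  now apply (is_RInt_gen_swap (Fa := at_point 1) (Fb := Rbar_locally p_infty)).
Qed.

Definition Gamma_boundary (y t : R) : R := - (Rpower t y * exp (- t)).

Lemma is_derive_Gamma_boundary y x : 0 < x ->
  is_derive (Gamma_boundary y) x (Gamma_integrand (y + 1) x - y * Gamma_integrand y x).
Proof.
  intros Hx. unfold Gamma_boundary, Gamma_integrand, Rpower. auto_derive; [auto|].
  replace (y + 1 - 1) with y by ring. replace ((y - 1) * ln x) with (y * ln x + - ln x) by ring.
  rewrite exp_plus, (exp_Ropp (ln x)), exp_ln by lra. field. lra.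
Qed.

Lemma Gamma_boundary_at_0 y : 0 < y -> filterlim (Gamma_boundary y) (at_right 0) (locally 0).
Proof.
  intros Hy.
  apply (filterlim_squeeze_0 _ _ _ (fun t => Rpower t y)); [now apply Rpower_at_right_0|].
  apply (filter_imp (fun t => 0 < t < 1)); [| apply at_right_0_below; lra].
  intros t Ht. unfold Gamma_boundary. rewrite Rabs_Ropp, Rabs_pos_eq
    by (left; apply Rmult_lt_0_compat; [apply Rpower_pos | apply exp_pos]).
  rewrite <- (Rmult_1_r (Rpower t y)) at 2.
  apply Rmult_le_compat_l; [left; apply Rpower_pos | apply exp_neg_le_1; lra].
Qed.

Lemma Gamma_boundary_at_infty y : filterlim (Gamma_boundary y) (Rbar_locally p_infty) (locally 0).
Proof.
  destruct (Rpower_exp_neg_le_exp_half y) as [K [HK HKb]].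
  apply (filterlim_squeeze_0 _ _ _ (fun t => K * exp (- t / 2))).
  - exact (filterlim_scal_0 _ _ _ _ exp_neg_half_at_infty).
  - exists 1. intros t Ht. unfold Gamma_boundary. rewrite Rabs_Ropp, Rabs_pos_eq
      by (left; apply Rmult_lt_0_compat; [apply Rpower_pos | apply exp_pos]).
    apply HKb. lra.
Qed.

Lemma is_RInt_gen_Gamma_integrand_difference y : 0 < y ->
  is_RInt_gen (fun t => Gamma_integrand (y + 1) t - y * Gamma_integrand y t)
    (at_right 0) (Rbar_locally p_infty) 0.
Proof.
  intros Hy. set (dB := fun t => Gamma_integrand (y + 1) t - y * Gamma_integrand y t).
  assert (Hpos : filter_prod (at_right 0) (Rbar_locally p_infty)
    (fun ab => forall x, Rmin (fst ab) (snd ab) <= x <= Rmax (fst ab) (snd ab) -> 0 < x)).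
  { apply Filter_prod with (fun a => 0 < a) (fun b => 0 < b).
    - exists (mkposreal 1 Rlt_0_1). intros; auto.
    - exists 0. intros; auto.
    - intros a b Ha Hb x. simpl. unfold Rmin, Rmax. destruct (Rle_dec a b); lra. }
  assert (HD : is_RInt_gen (Derive (Gamma_boundary y)) (at_right 0) (Rbar_locally p_infty) (0 - 0)).
  { apply is_RInt_gen_Derive.
    - revert Hpos. apply filter_imp. intros ab Hab x Hx.
      eexists. now apply is_derive_Gamma_boundary, Hab.
    - revert Hpos. apply filter_imp. intros ab Hab x Hx. assert (Hx0 := Hab x Hx).
      apply continuous_ext_loc with dB.
      + generalize (locally_open_interval 0 (x + 1) x ltac:(lra)). apply filter_imp.
        intros t Ht. symmetry. apply is_derive_unique, is_derive_Gamma_boundary. lra.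
      + apply continuous_Rminus_fun; [| apply continuous_Rmult_fun; [apply continuous_const |]];
          now apply continuous_Gamma_integrand.
    - now apply Gamma_boundary_at_0.
    - apply Gamma_boundary_at_infty. }
  rewrite Rminus_0_r in HD. revert HD. apply is_RInt_gen_ext.
  revert Hpos. apply filter_imp. intros ab Hab x Hx.
  apply is_derive_unique, is_derive_Gamma_boundary, Hab. lra.
Qed.

Lemma Gamma_succ y : 0 < y -> Gamma (y + 1) = y * Gamma y.
Proof.
  intros Hy. destruct (ex_Gamma_integral y Hy) as [L HL].
  assert (HFa : ProperFilter' (at_right 0)) by apply Proper_StrongProper, at_right_proper_filter.
  assert (HFb : ProperFilter' (Rbar_locally p_infty))
    by apply Proper_StrongProper, Rbar_locally_filter.
  change (RInt_gen (Gamma_integrand (y + 1)) (at_right 0) (Rbar_locally p_infty)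
    = y * RInt_gen (Gamma_integrand y) (at_right 0) (Rbar_locally p_infty)).
  rewrite (is_RInt_gen_unique (V := R_CompleteNormedModule) _ L HL).
  apply (is_RInt_gen_unique (V := R_CompleteNormedModule)).
  replace (y * L) with (plus 0 (scal y L)) by (unfold plus, scal; simpl; unfold mult; simpl; ring).
  generalize (is_RInt_gen_plus _ _ _ _ (is_RInt_gen_Gamma_integrand_difference y Hy)
    (is_RInt_gen_scal _ y _ HL)).
  apply is_RInt_gen_ext, filter_forall. intros ab x _.
  unfold plus, scal; simpl; unfold mult; simpl. ring.
Qed.

Definition hyp_coef (c nu : R) (k : nat) : R :=
  poch (- nu) k * poch (nu + 1) k / (Gamma (c + INR k) * INR (fact k)).

Lemma hyp2F1_reg_PSeries (nu c z : R) : hyp2F1_reg (- nu) (nu + 1) c z = PSeries (hyp_coef c nu) z.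
Proof. apply Series_ext. reflexivity. Qed.

Lemma hyp_coef_succ c nu k : 0 < c + INR k ->
  hyp_coef c nu (S k)
  = hyp_coef c nu k * ((INR k - nu) * (nu + 1 + INR k) / ((c + INR k) * (INR k + 1))).
Proof.
  intros Hc. unfold hyp_coef. simpl poch.
  rewrite S_INR. replace (c + (INR k + 1)) with ((c + INR k) + 1) by ring.
  rewrite Gamma_succ by auto. rewrite fact_simpl, mult_INR, S_INR.
  unfold Rdiv. rewrite !Rinv_mult. ring.
Qed.

Lemma hyp_coef_shift a nu k : 0 < a + INR k ->
  hyp_coef (a + 1) nu k * (a + INR k) = hyp_coef a nu k.
Proof.
  intros Ha. unfold hyp_coef.
  replace (a + 1 + INR k) with ((a + INR k) + 1) by ring. rewrite Gamma_succ by auto.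
  unfold Rdiv. rewrite !Rinv_mult.
  set (P := poch (- nu) k * poch (nu + 1) k).
  set (G := / Gamma (a + INR k)). set (F := / INR (fact k)).
  transitivity (P * G * F * ((a + INR k) * / (a + INR k))); [ring|].
  rewrite Rinv_r by lra. ring.
Qed.

Lemma is_lim_seq_ratio_shift p q : 0 < q -> is_lim_seq (fun k => (INR k + p) / (INR k + q)) 1.
Proof.
  intros Hq. apply (is_lim_seq_ext (fun k => 1 + (p - q) * / (INR k + q))).
  { intros k. generalize (pos_INR k). intros. field. lra. }
  replace (Finite 1) with (Finite (1 + (p - q) * 0)) by (f_equal; ring).
  apply is_lim_seq_plus'; [apply is_lim_seq_const|].
  apply is_lim_seq_mult'; [apply is_lim_seq_const|].
  replace (Finite 0) with (Rbar_inv p_infty) by reflexivity.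
  apply is_lim_seq_inv; [| discriminate].
  replace p_infty with (Rbar_plus p_infty q) by reflexivity.
  apply (is_lim_seq_plus _ _ p_infty q);
    [apply is_lim_seq_INR | apply is_lim_seq_const | reflexivity].
Qed.

Section Convergence.
Variables (c nu : R).
Hypothesis Hc : 0 < c.

(* A positive majorant of |hyp_coef|: |(k - nu)(nu + 1 + k)| <= (k + A)(k + A + 1), and the
   ratios of the majorant tend to 1. *)
Let A := Rabs nu + 1.
Let majorant_ratio (k : nat) := (INR k + A) * (INR k + A + 1) / ((c + INR k) * (INR k + 1)).

Fixpoint majorant (k : nat) : R :=
  match k with O => Rabs (hyp_coef c nu 0) + 1 | S k' => majorant k' * majorant_ratio k' end.

Lemma majorant_ratio_pos k : 0 < majorant_ratio k.
Proof.
  unfold majorant_ratio, A. assert (0 <= INR k) by apply pos_INR. generalize (Rabs_pos nu); intros.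
  apply Rdiv_lt_0_compat; apply Rmult_lt_0_compat; lra.
Qed.

Lemma majorant_pos k : 0 < majorant k.
Proof.
  induction k; simpl. generalize (Rabs_pos (hyp_coef c nu 0)); lra.
  apply Rmult_lt_0_compat; auto. apply majorant_ratio_pos.
Qed.

Lemma hyp_coef_le_majorant k : Rabs (hyp_coef c nu k) <= majorant k.
Proof.
  induction k; simpl. lra.
  assert (Hk0 : 0 <= INR k) by apply pos_INR.
  rewrite hyp_coef_succ by lra. rewrite Rabs_mult.
  apply Rmult_le_compat; try apply Rabs_pos; auto.
  unfold majorant_ratio, A. unfold Rdiv. rewrite !Rabs_mult, Rabs_inv.
  rewrite (Rabs_pos_eq ((c + INR k) * (INR k + 1))) by (apply Rmult_le_pos; lra).
  apply Rmult_le_compat_r. left; apply Rinv_0_lt_compat; apply Rmult_lt_0_compat; lra.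
  generalize (Rabs_pos nu); intros.
  apply Rmult_le_compat; try apply Rabs_pos.
  - eapply Rle_trans. apply Rabs_triang. rewrite Rabs_Ropp, Rabs_pos_eq by lra. lra.
  - replace (nu + 1 + INR k) with (nu + (1 + INR k)) by ring.
    eapply Rle_trans. apply Rabs_triang. rewrite (Rabs_pos_eq (1 + INR k)) by lra. lra.
Qed.

Lemma majorant_ratio_lim : is_lim_seq majorant_ratio 1.
Proof.
  unfold majorant_ratio.
  apply is_lim_seq_ext
    with (fun k => (INR k + A) / (INR k + c) * ((INR k + (A + 1)) / (INR k + 1))).
  - intros k. assert (0 <= INR k) by apply pos_INR. field. lra.
  - replace 1 with (1 * 1) by ring. apply is_lim_seq_mult'; apply is_lim_seq_ratio_shift; lra.
Qed.

Lemma CV_disk_hyp_coef r : 0 < r < 1 -> CV_disk (hyp_coef c nu) r.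
Proof.
  intros Hr. unfold CV_disk.
  apply (ex_series_le (K := R_AbsRing) (V := R_CompleteNormedModule) _
    (fun k => Rabs (majorant k * r ^ k))).
  - intros k.
    change (norm (Rabs (hyp_coef c nu k * r ^ k))) with (Rabs (Rabs (hyp_coef c nu k * r ^ k))).
    rewrite Rabs_Rabsolu. rewrite !Rabs_mult. apply Rmult_le_compat_r. apply Rabs_pos.
    eapply Rle_trans. apply hyp_coef_le_majorant. apply Rle_abs.
  - apply ex_series_DAlembert with r. lra.
    + intros k. apply Rmult_integral_contrapositive. split.
      generalize (majorant_pos k); lra. apply pow_nonzero. lra.
    + apply is_lim_seq_ext with (fun k => majorant_ratio k * r).
      * intros k. simpl. assert (0 < majorant k) by apply majorant_pos.
        assert (0 < r ^ k) by (apply pow_lt; lra).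
        rewrite Rabs_pos_eq.
        -- field. split; lra.
        -- left. apply Rdiv_lt_0_compat. apply Rmult_lt_0_compat. apply Rmult_lt_0_compat; auto.
           apply majorant_ratio_pos. apply Rmult_lt_0_compat; lra. apply Rmult_lt_0_compat; lra.
      * replace (Finite r) with (Rbar_mult 1 r) by (simpl; f_equal; ring).
        apply is_lim_seq_scal_r. apply majorant_ratio_lim.
Qed.

Lemma CV_radius_hyp_coef z : Rabs z < 1 -> Rbar_lt (Rabs z) (CV_radius (hyp_coef c nu)).
Proof.
  intros Hz. set (r := (Rabs z + 1) / 2).
  assert (Hr : 0 < r < 1) by (unfold r; generalize (Rabs_pos z); lra).
  assert (Hd := CV_disk_hyp_coef r Hr).
  destruct (Lub_Rbar_correct (CV_disk (hyp_coef c nu))) as [Hub _].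
  specialize (Hub r Hd). unfold CV_radius.
  destruct (Lub_Rbar (CV_disk (hyp_coef c nu))) as [l| |]; simpl in *; auto. unfold r in Hub. lra.
Qed.

End Convergence.

Lemma PSeries_hyp_coef_contiguous a nu z : 0 < a -> Rabs z < 1 ->
  PSeries (hyp_coef a nu) z
  = a * PSeries (hyp_coef (a + 1) nu) z + z * PSeries (PS_derive (hyp_coef (a + 1) nu)) z.
Proof.
  intros Ha Hz. assert (Hc : 0 < a + 1) by lra.
  assert (CV := CV_radius_hyp_coef (a + 1) nu Hc z Hz).
  assert (H1 := PSeries_correct _ _ (CV_radius_inside _ _ CV)).
  assert (H2 := PSeries_correct _ _ (ex_pseries_derive _ _ CV)).
  assert (H3 := is_pseries_incr_1 _ _ _ H2).
  assert (H4 := is_pseries_scal a _ _ _ (Rmult_comm z a) H1).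
  assert (H5 := is_pseries_plus _ _ _ _ _ H4 H3).
  apply is_pseries_unique.
  change (is_pseries (hyp_coef a nu) z
    (plus (scal a (PSeries (hyp_coef (a + 1) nu) z))
          (scal z (PSeries (PS_derive (hyp_coef (a + 1) nu)) z)))).
  revert H5. apply is_pseries_ext. intros k.
  unfold PS_plus, PS_scal, PS_incr_1, PS_derive. destruct k as [|j].
  - change (a * hyp_coef (a + 1) nu 0 + 0 = hyp_coef a nu 0).
    rewrite <- (hyp_coef_shift a nu 0) by (simpl; lra). simpl. ring.
  - change (a * hyp_coef (a + 1) nu (S j) + INR (S j) * hyp_coef (a + 1) nu (S j)
      = hyp_coef a nu (S j)).
    rewrite <- (hyp_coef_shift a nu (S j)); [ring | generalize (pos_INR (S j)); lra].
Qed.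

Lemma filterlim_at_right_0_of_pos (f : R -> R) (b : R) : 0 < b ->
  continuous f 0 -> f 0 = 0 -> (forall x, 0 < x < b -> 0 < f x) ->
  filterlim f (at_right 0) (at_right 0).
Proof.
  intros Hb Hc H0 Hpos P [d HP].
  assert (H1 := Hc (fun y => Rabs (y - 0) < d)). rewrite H0 in H1.
  destruct (H1 (locally_ball 0 d)) as [e He].
  assert (Hm : 0 < Rmin e b) by (apply Rmin_pos; [apply cond_pos | exact Hb]).
  exists (mkposreal _ Hm). intros y Hy Hy0. change (Rabs (y - 0) < Rmin e b) in Hy.
  generalize (Rmin_l e b) (Rmin_r e b). intros Hle Hlb. apply HP.
  - apply He. change (Rabs (y - 0) < e). lra.
  - rewrite Rminus_0_r, Rabs_pos_eq in Hy by lra. apply Hpos. lra.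
Qed.

Lemma sinp_pos a x : 0 < sinp a x.
Proof. apply Rpower_pos. Qed.

Lemma sinp_plus a b x : sinp (a + b) x = sinp a x * sinp b x.
Proof. apply Rpower_plus. Qed.

Lemma sinp_succ a x : 0 < x < PI -> sinp (a + 1) x = sinp a x * sin x.
Proof.
  intros Hx. unfold sinp. rewrite Rpower_plus, Rpower_1 by now apply sin_pos_0_PI. reflexivity.
Qed.

Lemma is_derive_sinp a x : 0 < x < PI -> is_derive (sinp a) x (a * sinp (a - 1) x * cos x).
Proof.
  intros Hx. rewrite Rmult_comm. apply (is_derive_comp (fun u => Rpower u a) sin).
  - now apply is_derive_Rpower_base, sin_pos_0_PI.
  - apply is_derive_Reals, derivable_pt_lim_sin.
Qed.

Lemma continuous_sinp a x : 0 < x < PI -> continuous (sinp a) x.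
Proof. intros Hx. apply ex_derive_continuous_R. eexists. now apply is_derive_sinp. Qed.

Lemma sinp_at_right_0 a : 0 < a -> filterlim (sinp a) (at_right 0) (locally 0).
Proof.
  intros Ha. apply (filterlim_comp _ _ _ sin (fun u => Rpower u a) _ (at_right 0)).
  - apply (filterlim_at_right_0_of_pos sin PI PI_RGT_0 (continuous_sin 0) sin_0 sin_pos_0_PI).
  - now apply Rpower_at_right_0.
Qed.

Definition hav (t : R) : R := (1 - cos t) / 2.

Lemma hav_bounds t : 0 < t < PI -> 0 < hav t < 1.
Proof.
  intros Ht. unfold hav.
  assert (cos t < 1) by (rewrite <- cos_0; apply cos_decreasing_1; lra).
  assert (-1 < cos t) by (rewrite <- cos_PI; apply cos_decreasing_1; lra).
  lra.
Qed.

Lemma is_derive_hav t : is_derive hav t (sin t / 2).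
Proof. unfold hav. auto_derive; [auto | field]. Qed.

Lemma hav_at_right_0 : filterlim hav (at_right 0) (at_right 0).
Proof.
  apply (filterlim_at_right_0_of_pos hav PI PI_RGT_0).
  - apply ex_derive_continuous_R. eexists. apply is_derive_hav.
  - unfold hav. rewrite cos_0. field.
  - intros x Hx. now apply hav_bounds.
Qed.

Definition sinFerrers (a nu t : R) : R := sinp a t * FerrersP (- a) nu (cos t).

Definition sinFerrers_series (a nu t : R) : R :=
  Rpower 2 a * (Rpower (hav t) a * PSeries (hyp_coef (a + 1) nu) (hav t)).

(* sin t = 2 sqrt (hav t (1 - hav t)), and the Ferrers prefactor is ((1 - hav t) / hav t)^(-a/2). *)
Lemma sinFerrers_eq_series a nu t : 0 < t < PI -> sinFerrers a nu t = sinFerrers_series a nu t.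
Proof.
  intros Ht. unfold sinFerrers, sinFerrers_series, sinp, FerrersP, hav.
  replace (1 - - a) with (a + 1) by ring. rewrite hyp2F1_reg_PSeries.
  assert (Hs := sin_pos_0_PI t Ht).
  assert (cos t < 1) by (rewrite <- cos_0; apply cos_decreasing_1; lra).
  assert (-1 < cos t) by (rewrite <- cos_PI; apply cos_decreasing_1; lra).
  rewrite <- !Rmult_assoc. f_equal.
  unfold Rpower. rewrite <- !exp_plus. f_equal.
  assert (Hl : ln (sin t) = (ln (1 + cos t) + ln (1 - cos t)) / 2).
  { rewrite <- ln_mult by lra.
    replace ((1 + cos t) * (1 - cos t)) with (sin t * sin t)
      by (generalize (sin2 t); unfold Rsqr; intros E; rewrite E; ring).
    rewrite ln_mult by lra. field. }
  unfold Rdiv. rewrite ln_mult, ln_Rinv, ln_mult, ln_Rinv by (try apply Rinv_0_lt_compat; lra).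
  rewrite Hl. field.
Qed.

Lemma is_derive_sinFerrers_series a nu t : -1 < a -> 0 < t < PI ->
  is_derive (sinFerrers_series a nu) t
    (Rpower 2 a * (sin t / 2 * (a * Rpower (hav t) (a - 1)) * PSeries (hyp_coef (a + 1) nu) (hav t)
      + Rpower (hav t) a * (sin t / 2 * PSeries (PS_derive (hyp_coef (a + 1) nu)) (hav t)))).
Proof.
  intros Ha Ht. destruct (hav_bounds t Ht) as [Hz0 Hz1].
  assert (CV : Rbar_lt (Rabs (hav t)) (CV_radius (hyp_coef (a + 1) nu)))
    by (apply CV_radius_hyp_coef; [lra | rewrite Rabs_pos_eq; lra]).
  apply is_derive_scal, (is_derive_Rmult_fun (fun t => Rpower (hav t) a)
    (fun t => PSeries (hyp_coef (a + 1) nu) (hav t))).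
  - apply (is_derive_comp (fun u => Rpower u a) hav); [now apply is_derive_Rpower_base|].
    apply is_derive_hav.
  - apply (is_derive_comp (PSeries (hyp_coef (a + 1) nu)) hav); [now apply is_derive_PSeries|].
    apply is_derive_hav.
Qed.

Lemma sinFerrers_locally_eq_series a nu t : 0 < t < PI ->
  locally t (fun x => sinFerrers_series a nu x = sinFerrers a nu x).
Proof.
  intros Ht. generalize (locally_open_interval 0 PI t Ht). apply filter_imp.
  intros x Hx. symmetry. now apply sinFerrers_eq_series.
Qed.

Lemma continuous_sinFerrers a nu t : -1 < a -> 0 < t < PI -> continuous (sinFerrers a nu) t.
Proof.
  intros Ha Ht. apply ex_derive_continuous_R. eexists.
  apply (is_derive_ext_loc _ _ _ _ (sinFerrers_locally_eq_series a nu t Ht)).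
  now apply is_derive_sinFerrers_series.
Qed.

(* The Ferrers-function form of the contiguous relation of PSeries_hyp_coef_contiguous. *)
Lemma is_derive_sinFerrers a nu t : 0 < a -> 0 < t < PI ->
  is_derive (sinFerrers a nu) t (sin t * sinFerrers (a - 1) nu t).
Proof.
  intros Ha Ht. destruct (hav_bounds t Ht) as [Hz0 Hz1].
  apply (is_derive_ext_loc _ _ _ _ (sinFerrers_locally_eq_series a nu t Ht)).
  eapply is_derive_ext; [reflexivity|].
  match goal with |- is_derive _ _ ?d => replace d with (Rpower 2 a * (sin t / 2 *
    (a * Rpower (hav t) (a - 1)) * PSeries (hyp_coef (a + 1) nu) (hav t) + Rpower (hav t) a *
    (sin t / 2 * PSeries (PS_derive (hyp_coef (a + 1) nu)) (hav t)))) end.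
  { apply is_derive_sinFerrers_series; lra. }
  rewrite (sinFerrers_eq_series (a - 1)) by exact Ht.
  unfold sinFerrers_series. replace (a - 1 + 1) with a by ring.
  rewrite (PSeries_hyp_coef_contiguous a nu (hav t)) by (auto; rewrite Rabs_pos_eq; lra).
  assert (Epow : forall x, 0 < x -> Rpower x a = Rpower x (a - 1) * x).
  { intros x Hx. rewrite <- (Rpower_1 x) at 3 by exact Hx. rewrite <- Rpower_plus. f_equal. ring. }
  rewrite (Epow 2), (Epow (hav t)) by lra. field.
Qed.

Lemma sinFerrers_at_right_0 a nu : 0 < a -> filterlim (sinFerrers a nu) (at_right 0) (locally 0).
Proof.
  intros Ha. apply filterlim_ext_loc with (sinFerrers_series a nu).
  { generalize (at_right_0_below PI PI_RGT_0). apply filter_imp.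
    intros y Hy. symmetry. now apply sinFerrers_eq_series. }
  refine (filterlim_scal_0 _ _ _ _ _).
  apply (filterlim_ext (fun t => PSeries (hyp_coef (a + 1) nu) (hav t) * Rpower (hav t) a));
    [intros; ring|].
  refine (filterlim_mult_0 _ _ _ _ (PSeries (hyp_coef (a + 1) nu) 0) _ _).
  - apply (filterlim_comp _ _ _ hav (PSeries (hyp_coef (a + 1) nu)) _ (locally 0)).
    + eapply filterlim_filter_le_2; [apply at_right_le_locally | apply hav_at_right_0].
    + apply ex_derive_continuous_R, ex_derive_PSeries, CV_radius_hyp_coef; [lra|].
      rewrite Rabs_R0. lra.
  - apply (filterlim_comp _ _ _ hav (fun u => Rpower u a) _ (at_right 0)).
    + apply hav_at_right_0.
    + now apply Rpower_at_right_0.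
Qed.

Lemma continuous_cot x : 0 < x < PI -> continuous cot x.
Proof.
  intros Hx. apply ex_derive_continuous_R. unfold cot. auto_derive.
  generalize (sin_pos_0_PI x Hx). lra.
Qed.

Lemma is_derive_cot x : 0 < x < PI -> is_derive cot x (- (1 + cot x ^ 2)).
Proof.
  intros Hx. assert (Hs := sin_pos_0_PI x Hx). unfold cot. auto_derive; [lra | field; lra].
Qed.

Lemma filterlim_difference_quotient_at_right (f : R -> R) (x l : R) : is_derive f x l ->
  filterlim (fun h => (f (x + h) - f x) / h) (at_right 0) (locally l).
Proof.
  intros Hd. apply is_derive_Reals in Hd. intros P [eps HP].
  destruct (Hd eps (cond_pos eps)) as [d Hdd].
  exists d. intros y Hy Hy0. apply HP. change (Rabs ((f (x + y) - f x) / y - l) < eps).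
  change (Rabs (y - 0) < d) in Hy. rewrite Rminus_0_r in Hy. apply Hdd; [lra | exact Hy].
Qed.

Section Geometry.
Variable r : R -> R.
Hypothesis r_derivable : forall t, ex_derive r t.
Hypothesis Derive_r_derivable : forall t, ex_derive (Derive r) t.
Hypothesis D2_r_continuous : forall t, continuous (D2 r) t.
Hypothesis r_even : forall t, r (- t) = r t.

Lemma Derive_r_0 : Derive r 0 = 0.
Proof.
  assert (H : is_derive (fun x => r (- x)) 0 (-1 * Derive r 0)).
  { apply (is_derive_comp r Ropp 0 (Derive r 0) (-1)).
    - rewrite Ropp_0. apply Derive_correct, r_derivable.
    - auto_derive; auto. }
  apply (is_derive_ext _ r _ _ r_even), is_derive_unique in H. lra.
Qed.

Lemma r1_0 : r1 r 0 = r 0 + D2 r 0.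
Proof. unfold r1. rewrite sin_0. destruct (Req_EM_T 0 0); [reflexivity | congruence]. Qed.

Lemma r1_inside x : 0 < x < PI -> r1 r x = r x + Derive r x * cot x.
Proof.
  intros Hx. unfold r1. destruct (Req_EM_T (sin x) 0) as [E|]; auto.
  generalize (sin_pos_0_PI x Hx). lra.
Qed.

Lemma astig_inside x : 0 < x < PI -> astig r x = D2 r x - Derive r x * cot x.
Proof. intros Hx. unfold astig, r2. rewrite r1_inside by exact Hx. ring. Qed.

Lemma r_eq_r1_Derive_div_sin x : 0 < x < PI -> r x = r1 r x - cos x * (Derive r x / sin x).
Proof.
  intros Hx. rewrite r1_inside by exact Hx. unfold cot.
  generalize (sin_pos_0_PI x Hx). intros. field. lra.
Qed.

Lemma continuous_astig x : 0 < x < PI -> continuous (astig r) x.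
Proof.
  intros Hx. apply continuous_ext_loc with (fun y => D2 r y - Derive r y * cot y).
  - generalize (locally_open_interval 0 PI x Hx). apply filter_imp.
    intros y Hy. symmetry. now apply astig_inside.
  - apply continuous_Rminus_fun; [apply D2_r_continuous|].
    apply continuous_Rmult_fun;
      [apply ex_derive_continuous_R, Derive_r_derivable | now apply continuous_cot].
Qed.

Lemma is_derive_r1 x : 0 < x < PI -> is_derive (r1 r) x (astig r x * cot x).
Proof.
  intros Hx. apply (is_derive_ext_loc (fun y => r y + Derive r y * cot y)).
  { generalize (locally_open_interval 0 PI x Hx). apply filter_imp.
    intros y Hy. symmetry. now apply r1_inside. }
  replace (astig r x * cot x) with (Derive r x + (D2 r x * cot x + Derive r x * - (1 + cot x ^ 2))).
  - apply (is_derive_plus (K := R_AbsRing) (V := R_NormedModule)).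
    + apply Derive_correct, r_derivable.
    + apply is_derive_Rmult_fun;
        [apply Derive_correct, Derive_r_derivable | now apply is_derive_cot].
  - rewrite astig_inside by exact Hx. ring.
Qed.

Lemma is_derive_Derive_div_sin x : 0 < x < PI ->
  is_derive (fun y => Derive r y / sin y) x (astig r x / sin x).
Proof.
  intros Hx. assert (Hs := sin_pos_0_PI x Hx).
  replace (astig r x / sin x) with (D2 r x * / sin x + Derive r x * (- cos x / sin x ^ 2)).
  - apply (is_derive_Rmult_fun (Derive r) (fun y => / sin y));
      [apply Derive_correct, Derive_r_derivable|].
    auto_derive; [lra | field; lra].
  - rewrite astig_inside by exact Hx. unfold cot. field. lra.
Qed.

Lemma Derive_div_sin_at_right_0 :
  filterlim (fun y => Derive r y / sin y) (at_right 0) (locally (D2 r 0)).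
Proof.
  (* r'(0) = 0 = sin 0, so r' / sin is a quotient of two difference quotients at 0. *)
  assert (H1 := filterlim_difference_quotient_at_right (Derive r) 0 (D2 r 0)
    (Derive_correct _ _ (Derive_r_derivable 0))).
  assert (H2 : filterlim (fun h => (sin (0 + h) - sin 0) / h) (at_right 0) (locally 1)).
  { apply filterlim_difference_quotient_at_right. rewrite <- cos_0.
    apply is_derive_Reals, derivable_pt_lim_sin. }
  assert (H3 : filterlim (fun h => / ((sin (0 + h) - sin 0) / h)) (at_right 0) (locally 1)).
  { apply (filterlim_comp _ _ _ _ Rinv _ _ _ H2).
    rewrite <- Rinv_1 at 2. apply ex_derive_continuous_R. auto_derive. lra. }
  apply filterlim_ext_loc
    with (fun h => (Derive r (0 + h) - Derive r 0) / h * / ((sin (0 + h) - sin 0) / h)).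
  - generalize (at_right_0_below PI PI_RGT_0). apply filter_imp. intros y Hy.
    rewrite Derive_r_0, sin_0, Rplus_0_l. generalize (sin_pos_0_PI y Hy). intros. field. lra.
  - rewrite <- (Rmult_1_r (D2 r 0)). exact (filterlim_Rmult_fun _ _ _ _ _ _ H1 H3).
Qed.

Lemma r1_at_right_0 : filterlim (r1 r) (at_right 0) (locally (r1 r 0)).
Proof.
  rewrite r1_0. apply filterlim_ext_loc with (fun h => r h + Derive r h / sin h * cos h).
  - generalize (at_right_0_below PI PI_RGT_0). apply filter_imp. intros y Hy.
    rewrite r1_inside by exact Hy. unfold cot. generalize (sin_pos_0_PI y Hy). intros. field. lra.
  - refine (filterlim_Rplus_fun _ _ _ _ _ _ _ _).
    + apply filterlim_at_right_of_continuous, ex_derive_continuous_R, r_derivable.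
    + rewrite <- (Rmult_1_r (D2 r 0)), <- cos_0. refine (filterlim_Rmult_fun _ _ _ _ _ _ _ _).
      * apply Derive_div_sin_at_right_0.
      * apply filterlim_at_right_of_continuous, continuous_cos.
Qed.

End Geometry.

Lemma sum_n_m_1_0 (a : nat -> R) : sum_n_m a 1 0 = 0.
Proof. apply (sum_n_m_zero (G := R_AbelianMonoid)). lia. Qed.

Lemma sum_n_m_1_S (a : nat -> R) M : sum_n_m a 1 (S M) = sum_n_m a 1 M + a (S M).
Proof. apply (sum_n_Sm (G := R_AbelianMonoid)). lia. Qed.

Lemma is_derive_sum_n_m_1 (A d : nat -> R -> R) M x :
  (forall m, is_derive (A m) x (d m x)) ->
  is_derive (fun y => sum_n_m (fun m => A m y) 1 M) x (sum_n_m (fun m => d m x) 1 M).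
Proof.
  intros Hd. induction M as [|M IH].
  - apply (is_derive_ext (fun _ => 0)); [intros; now rewrite sum_n_m_1_0|].
    rewrite sum_n_m_1_0. apply (is_derive_const (K := R_AbsRing) (V := R_NormedModule)).
  - apply (is_derive_ext (fun y => sum_n_m (fun m => A m y) 1 M + A (S M) y));
      [intros; now rewrite sum_n_m_1_S|].
    rewrite sum_n_m_1_S. now apply (is_derive_plus (K := R_AbsRing) (V := R_NormedModule)).
Qed.

Lemma continuous_sum_n_m_1 (A : nat -> R -> R) M x :
  (forall m, continuous (A m) x) -> continuous (fun y => sum_n_m (fun m => A m y) 1 M) x.
Proof.
  intros Hc. induction M as [|M IH].
  - apply (continuous_ext (fun _ => 0)); [intros; now rewrite sum_n_m_1_0 | apply continuous_const].
  - apply (continuous_ext (fun y => sum_n_m (fun m => A m y) 1 M + A (S M) y));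
      [intros; now rewrite sum_n_m_1_S | now apply continuous_Rplus_fun].
Qed.

Lemma sum_n_m_1_at_right_0 (A : nat -> R -> R) M :
  (forall m, filterlim (A m) (at_right 0) (locally 0)) ->
  filterlim (fun y => sum_n_m (fun m => A m y) 1 M) (at_right 0) (locally 0).
Proof.
  intros Hl. induction M as [|M IH].
  - apply (filterlim_ext (fun _ => 0)); [intros; now rewrite sum_n_m_1_0 | apply filterlim_const].
  - apply (filterlim_ext (fun y => sum_n_m (fun m => A m y) 1 M + A (S M) y));
      [intros; now rewrite sum_n_m_1_S | exact (filterlim_plus_0 _ _ _ _ IH (Hl (S M)))].
Qed.

Lemma is_series_of_lim_sum_n_m_1 (b : nat -> R) (c L : R) :
  is_lim_seq (fun M => c + sum_n_m b 1 M) L -> is_series (fun k => b (S k)) (L - c).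
Proof.
  intros H. apply is_lim_seq_incr_1 in H.
  change (is_lim_seq (sum_n (fun k => b (S k))) (L - c)).
  apply (is_lim_seq_ext (fun M => c + sum_n_m b 1 (S M) - c)).
  - intros M. unfold sum_n. rewrite (sum_n_m_S (G := R_AbelianMonoid)). ring.
  - apply is_lim_seq_minus'; [exact H | apply is_lim_seq_const].
Qed.

Lemma sinp_le_sinp_cos_add a x t : -1 < a -> 0 < x <= t -> t < PI ->
  sinp a x <= sinp a x * cos x + / (1 + cos t).
Proof.
  intros Ha Hx Ht. assert (Hx0 : 0 < x < PI) by lra.
  assert (Hct : -1 < cos t) by (rewrite <- cos_PI; apply cos_decreasing_1; lra).
  assert (Hcx : cos t <= cos x)
    by (destruct (Req_dec x t); [subst; lra | left; apply cos_decreasing_1; lra]).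
  assert (Hsq : sinp a x * (1 - cos x) * (1 + cos x) <= 1).
  { replace (sinp a x * (1 - cos x) * (1 + cos x)) with (sinp (a + 1 + 1) x).
    - apply Rpower_le_1; [split; [now apply sin_pos_0_PI | apply SIN_bound] | lra].
    - rewrite !sinp_succ, !Rmult_assoc by exact Hx0. f_equal.
      generalize (sin2_cos2 x). unfold Rsqr. intros E. nra. }
  assert (Hle : sinp a x * (1 - cos x) <= / (1 + cos x)).
  { apply Rmult_le_reg_r with (1 + cos x); [lra|]. rewrite Rinv_l by lra. exact Hsq. }
  assert (/ (1 + cos x) <= / (1 + cos t)) by (apply Rinv_le_contravar; lra).
  lra.
Qed.

Lemma ex_is_RInt_gen_sinp a t : -1 < a -> 0 < t < PI ->
  exists I, is_RInt_gen (sinp a) (at_right 0) (at_point t) I.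
Proof.
  intros Ha Ht. set (M := / (1 + cos t)).
  apply (ex_is_RInt_gen_dominated (sinp a) (fun x => sinp a x * cos x + M)
    (fun x => / (a + 1) * sinp (a + 1) x + M * x) (at_right 0) t 0).
  - apply (filter_imp (fun x => 0 < x < t)); [| apply at_right_0_below; lra].
    intros b Hb x Hx. rewrite Rmin_left, Rmax_right in Hx by lra.
    assert (Hx0 : 0 < x < PI) by lra.
    split; [split | split; [| split]].
    + left. apply sinp_pos.
    + apply sinp_le_sinp_cos_add; lra.
    + apply (is_derive_plus (K := R_AbsRing) (V := R_NormedModule)
        (fun x => / (a + 1) * sinp (a + 1) x) (fun x => M * x)).
      * replace (sinp a x * cos x) with (/ (a + 1) * ((a + 1) * sinp (a + 1 - 1) x * cos x)).
        -- apply is_derive_scal. now apply is_derive_sinp.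
        -- replace (a + 1 - 1) with a by ring. field. lra.
      * auto_derive; auto. ring.
    + now apply continuous_sinp.
    + apply continuous_Rplus_fun; [| apply continuous_const].
      apply continuous_Rmult_fun; [now apply continuous_sinp | apply continuous_cos].
  - refine (filterlim_plus_0 _ _ _ _ _ _).
    + refine (filterlim_scal_0 _ _ _ _ _). apply sinp_at_right_0. lra.
    + refine (filterlim_scal_0 _ _ _ _ _).
      eapply filterlim_filter_le_1; [apply at_right_le_locally | apply filterlim_id].
Qed.

Section Expansion.
Variables (n : R) (gamma : nat -> R).
Hypothesis n_gt_m1 : -1 < n.

Definition Ferrers_term (m : nat) (x : R) : R := gamma m * FerrersP (- n) (n + INR m) (cos x).

Definition Ferrers_partial_sum (M : nat) (x : R) : R :=
  gamma 0%nat * sinp n x + sum_n_m (fun m => Ferrers_term m x) 1 M.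

Definition weight (x : R) : R := sinp (n + 1) x.

Definition weight_cos (x : R) : R := sinp (n + 1) x * cos x.

Definition Ferrers_primitive (m : nat) (x : R) : R :=
  gamma m * sinFerrers (n + 1) (n + INR m) x.

Definition Ferrers_primitive_cos (m : nat) (x : R) : R :=
  gamma m * (sinFerrers (n + 2) (n + INR m) x + cos x * sinFerrers (n + 1) (n + INR m) x).

Lemma Ferrers_term_eq m x :
  0 < x < PI -> Ferrers_term m x = gamma m * (sinFerrers n (n + INR m) x / sinp n x).
Proof.
  intros Hx. unfold Ferrers_term, sinFerrers. generalize (sinp_pos n x). intros. field. lra.
Qed.

Lemma continuous_Ferrers_term m x : 0 < x < PI -> continuous (Ferrers_term m) x.
Proof.
  intros Hx.
  apply continuous_ext_loc with (fun y => gamma m * (sinFerrers n (n + INR m) y * / sinp n y)).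
  - generalize (locally_open_interval 0 PI x Hx). apply filter_imp.
    intros y Hy. symmetry. now apply Ferrers_term_eq.
  - apply continuous_Rmult_fun; [apply continuous_const|].
    apply continuous_Rmult_fun; [now apply continuous_sinFerrers|].
    apply continuous_Rinv_fun; [now apply continuous_sinp | generalize (sinp_pos n x); lra].
Qed.

Lemma continuous_Ferrers_partial_sum M x : 0 < x < PI -> continuous (Ferrers_partial_sum M) x.
Proof.
  intros Hx. apply continuous_Rplus_fun.
  - apply continuous_Rmult_fun; [apply continuous_const | now apply continuous_sinp].
  - apply continuous_sum_n_m_1. intros m. now apply continuous_Ferrers_term.
Qed.

Lemma continuous_weight x : 0 < x < PI -> continuous weight x.
Proof. apply continuous_sinp. Qed.

Lemma continuous_weight_cos x : 0 < x < PI -> continuous weight_cos x.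
Proof.
  intros Hx. apply continuous_Rmult_fun; [now apply continuous_sinp | apply continuous_cos].
Qed.

Lemma is_derive_Ferrers_primitive m x : 0 < x < PI ->
  is_derive (Ferrers_primitive m) x (Ferrers_term m x * weight x).
Proof.
  intros Hx. replace (Ferrers_term m x * weight x)
    with (gamma m * (sin x * sinFerrers (n + 1 - 1) (n + INR m) x)).
  - apply is_derive_scal, is_derive_sinFerrers; [lra | exact Hx].
  - replace (n + 1 - 1) with n by ring. rewrite Ferrers_term_eq by exact Hx.
    unfold weight. rewrite sinp_succ by exact Hx. generalize (sinp_pos n x). intros. field. lra.
Qed.

Lemma is_derive_Ferrers_primitive_cos m x : 0 < x < PI ->
  is_derive (Ferrers_primitive_cos m) x (Ferrers_term m x * weight_cos x).
Proof.
  intros Hx. set (nu := n + INR m).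
  replace (Ferrers_term m x * weight_cos x) with (gamma m * (sin x * sinFerrers (n + 2 - 1) nu x
    + (- sin x * sinFerrers (n + 1) nu x + cos x * (sin x * sinFerrers (n + 1 - 1) nu x)))).
  - apply is_derive_scal.
    apply (is_derive_plus (K := R_AbsRing) (V := R_NormedModule) (sinFerrers (n + 2) nu)
      (fun y => cos y * sinFerrers (n + 1) nu y)).
    + apply is_derive_sinFerrers; [lra | exact Hx].
    + apply is_derive_Rmult_fun; [auto_derive; [auto | ring] |].
      apply is_derive_sinFerrers; [lra | exact Hx].
  - replace (n + 2 - 1) with (n + 1) by ring. replace (n + 1 - 1) with n by ring.
    rewrite Ferrers_term_eq by exact Hx. unfold nu, weight_cos. rewrite sinp_succ by exact Hx.
    generalize (sinp_pos n x). intros. field. lra.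
Qed.

Lemma Ferrers_primitive_at_right_0 m : filterlim (Ferrers_primitive m) (at_right 0) (locally 0).
Proof. refine (filterlim_scal_0 _ _ _ _ _). apply sinFerrers_at_right_0. lra. Qed.

Lemma Ferrers_primitive_cos_at_right_0 m :
  filterlim (Ferrers_primitive_cos m) (at_right 0) (locally 0).
Proof.
  refine (filterlim_scal_0 _ _ _ _ _). refine (filterlim_plus_0 _ _ _ _ _ _).
  - apply sinFerrers_at_right_0. lra.
  - refine (filterlim_mult_0 _ _ _ _ (cos 0) _ _).
    + apply filterlim_at_right_of_continuous, continuous_cos.
    + apply sinFerrers_at_right_0. lra.
Qed.

Lemma weight_sq_div_sin x : 0 < x < PI -> weight x ^ 2 / sin x = sinp (2 * n + 1) x.
Proof.
  intros Hx. unfold weight.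
  replace (sinp (n + 1) x ^ 2) with (sinp (n + 1) x * sinp (n + 1) x) by ring.
  rewrite <- sinp_plus.
  replace (n + 1 + (n + 1)) with (2 * n + 1 + 1) by ring. rewrite sinp_succ by exact Hx.
  generalize (sin_pos_0_PI x Hx). intros. field. lra.
Qed.

Lemma weight_cos_sq_div_sin_le x : 0 < x < PI -> weight_cos x ^ 2 / sin x <= sinp (2 * n + 1) x.
Proof.
  intros Hx. rewrite <- weight_sq_div_sin by exact Hx. unfold weight_cos, weight.
  assert (Hc : cos x ^ 2 <= 1) by (generalize (COS_bound x); intros; nra).
  unfold Rdiv. apply Rmult_le_compat_r; [left; now apply Rinv_0_lt_compat, sin_pos_0_PI|].
  rewrite Rpow_mult_distr. rewrite <- (Rmult_1_r (sinp (n + 1) x ^ 2)) at 2.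
  apply Rmult_le_compat_l; [apply pow2_ge_0 | exact Hc].
Qed.

Variable r : R -> R.
Hypothesis r_derivable : forall t, ex_derive r t.
Hypothesis Derive_r_derivable : forall t, ex_derive (Derive r) t.
Hypothesis D2_r_continuous : forall t, continuous (D2 r) t.
Hypothesis r_even : forall t, r (- t) = r t.

Definition scaled_astig (x : R) : R := astig r x / sinp (n + 2) x.

Lemma continuous_scaled_astig x : 0 < x < PI -> continuous scaled_astig x.
Proof.
  intros Hx. apply continuous_Rmult_fun; [now apply continuous_astig|].
  apply continuous_Rinv_fun; [now apply continuous_sinp | generalize (sinp_pos (n + 2) x); lra].
Qed.

Hypothesis partial_sums_L2 : L2sin_lim Ferrers_partial_sum scaled_astig.

Section At_t.
Variable t : R.
Hypothesis t_in : 0 < t < PI.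

Variable sinp_integral : R.
Hypothesis is_RInt_gen_sinp_integral :
  is_RInt_gen (sinp (2 * n + 1)) (at_right 0) (at_point t) sinp_integral.

Lemma RInt_sq_div_sin_le_sinp_integral (w : R -> R) :
  (forall x, 0 < x < PI -> continuous w x) ->
  (forall x, 0 < x < PI -> w x ^ 2 / sin x <= sinp (2 * n + 1) x) ->
  forall a, 0 < a < t -> RInt (fun x => w x ^ 2 / sin x) a t <= sinp_integral.
Proof.
  intros Hc Hle a Ha.
  apply Rle_trans with (RInt (sinp (2 * n + 1)) a t).
  - apply RInt_le; [lra | | | intros; apply Hle; lra];
      apply (ex_RInt_continuous_on _ 0 PI); try lra; intros x Hx.
    + apply continuous_Rmult_fun.
      * apply continuous_Rmult_fun; auto. apply continuous_Rmult_fun; auto. apply continuous_const.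
      * apply continuous_Rinv_fun; [apply continuous_sin | generalize (sin_pos_0_PI x Hx); lra].
    + now apply continuous_sinp.
  - apply (RInt_le_is_RInt_gen (at_point t) _ a t PI); [lra | unfold at_point; lra | | |].
    + intros. now apply continuous_sinp.
    + intros. left. apply sinp_pos.
    + exact is_RInt_gen_sinp_integral.
Qed.

Lemma sinp_integral_ge_0 : 0 <= sinp_integral.
Proof.
  apply (is_RInt_gen_ge_0 (at_point t) (sinp (2 * n + 1)) t PI); [lra | unfold at_point; lra | | |].
  - intros. now apply continuous_sinp.
  - intros. left. apply sinp_pos.
  - exact is_RInt_gen_sinp_integral.
Qed.

Lemma is_RInt_gen_sum_Ferrers_terms (w : R -> R) (P : nat -> R -> R) M :
  (forall x, 0 < x < PI -> continuous w x) ->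
  (forall m x, 0 < x < PI -> is_derive (P m) x (Ferrers_term m x * w x)) ->
  (forall m, filterlim (P m) (at_right 0) (locally 0)) ->
  is_RInt_gen (fun x => sum_n_m (fun m => Ferrers_term m x) 1 M * w x) (at_right 0) (at_point t)
    (sum_n_m (fun m => P m t) 1 M).
Proof.
  intros Hw HP HP0. rewrite <- (Rminus_0_r (sum_n_m (fun m => P m t) 1 M)).
  apply (is_RInt_gen_ext_on (fun x => sum_n_m (fun m => Ferrers_term m x * w x) 1 M) _ PI t _ t_in).
  { intros x _. apply (sum_n_m_mult_r (K := R_Ring)). }
  apply (is_RInt_gen_at_right_0_of_derive (fun x => sum_n_m (fun m => P m x) 1 M) _ PI); auto.
  - intros x Hx. apply (is_derive_sum_n_m_1 P (fun m x => Ferrers_term m x * w x)). auto.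
  - intros x Hx. apply (continuous_sum_n_m_1 (fun m x => Ferrers_term m x * w x)). intros m.
    apply continuous_Rmult_fun; [now apply continuous_Ferrers_term | auto].
  - now apply sum_n_m_1_at_right_0.
Qed.

Lemma is_RInt_gen_partial_sum_weight M :
  is_RInt_gen (fun x => Ferrers_partial_sum M x * weight x) (at_right 0) (at_point t)
    (gamma 0%nat * sinp_integral + sum_n_m (fun m => Ferrers_primitive m t) 1 M).
Proof.
  apply (is_RInt_gen_ext_on (fun x => plus (scal (gamma 0%nat) (sinp (2 * n + 1) x))
    (sum_n_m (fun m => Ferrers_term m x) 1 M * weight x)) _ PI t _ t_in).
  - intros x Hx. unfold Ferrers_partial_sum, weight, plus, scal; simpl; unfold mult; simpl.
    replace (2 * n + 1) with (n + (n + 1)) by ring. rewrite sinp_plus. ring.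
  - exact (is_RInt_gen_plus _ _ _ _ (is_RInt_gen_scal _ _ _ is_RInt_gen_sinp_integral)
      (is_RInt_gen_sum_Ferrers_terms weight Ferrers_primitive M continuous_weight
         is_derive_Ferrers_primitive Ferrers_primitive_at_right_0)).
Qed.

Lemma is_RInt_gen_partial_sum_weight_cos M :
  is_RInt_gen (fun x => Ferrers_partial_sum M x * weight_cos x) (at_right 0) (at_point t)
    (gamma 0%nat * (sinp (2 * n + 2) t / (2 * n + 2))
     + sum_n_m (fun m => Ferrers_primitive_cos m t) 1 M).
Proof.
  apply (is_RInt_gen_ext_on (fun x => plus (gamma 0%nat * sinp n x * weight_cos x)
    (sum_n_m (fun m => Ferrers_term m x) 1 M * weight_cos x)) _ PI t _ t_in).
  { intros x Hx. unfold Ferrers_partial_sum, plus; simpl. ring. }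
  apply (is_RInt_gen_plus (V := R_NormedModule)).
  - replace (gamma 0%nat * (sinp (2 * n + 2) t / (2 * n + 2)))
      with (gamma 0%nat * (/ (2 * n + 2) * sinp (2 * n + 2) t) - 0) by (unfold Rdiv; ring).
    apply (is_RInt_gen_at_right_0_of_derive
      (fun x => gamma 0%nat * (/ (2 * n + 2) * sinp (2 * n + 2) x)) _ PI); auto.
    + intros x Hx. replace (gamma 0%nat * sinp n x * weight_cos x)
        with (gamma 0%nat * (/ (2 * n + 2) * ((2 * n + 2) * sinp (2 * n + 2 - 1) x * cos x))).
      * now apply is_derive_scal, is_derive_scal, is_derive_sinp.
      * unfold weight_cos. replace (2 * n + 2 - 1) with (n + (n + 1)) by ring.
        rewrite sinp_plus. field. lra.
    + intros x Hx. apply continuous_Rmult_fun; [| now apply continuous_weight_cos].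
      apply continuous_Rmult_fun; [apply continuous_const | now apply continuous_sinp].
    + refine (filterlim_scal_0 _ _ _ _ _). refine (filterlim_scal_0 _ _ _ _ _).
      apply sinp_at_right_0. lra.
  - apply is_RInt_gen_sum_Ferrers_terms.
    + apply continuous_weight_cos.
    + apply is_derive_Ferrers_primitive_cos.
    + apply Ferrers_primitive_cos_at_right_0.
Qed.

Lemma is_RInt_gen_scaled_astig_weight_cos :
  is_RInt_gen (fun x => scaled_astig x * weight_cos x) (at_right 0) (at_point t) (r1 r t - r1 r 0).
Proof.
  apply (is_RInt_gen_ext_on (fun x => astig r x * cot x) _ PI t _ t_in).
  - intros x Hx. unfold scaled_astig, weight_cos, cot.
    replace (n + 2) with (n + 1 + 1) by ring. rewrite sinp_succ by exact Hx.
    generalize (sinp_pos (n + 1) x) (sin_pos_0_PI x Hx). intros. field. lra.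
  - apply (is_RInt_gen_at_right_0_of_derive (r1 r) _ PI); auto.
    + intros x Hx. now apply is_derive_r1.
    + intros x Hx.
      apply continuous_Rmult_fun; [now apply continuous_astig | now apply continuous_cot].
    + now apply r1_at_right_0.
Qed.

Lemma is_RInt_gen_scaled_astig_weight :
  is_RInt_gen (fun x => scaled_astig x * weight x) (at_right 0) (at_point t)
    (Derive r t / sin t - D2 r 0).
Proof.
  apply (is_RInt_gen_ext_on (fun x => astig r x / sin x) _ PI t _ t_in).
  - intros x Hx. unfold scaled_astig, weight.
    replace (n + 2) with (n + 1 + 1) by ring. rewrite sinp_succ by exact Hx.
    generalize (sinp_pos (n + 1) x) (sin_pos_0_PI x Hx). intros. field. lra.
  - apply (is_RInt_gen_at_right_0_of_derive (fun x => Derive r x / sin x) _ PI); auto.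
    + intros x Hx. now apply is_derive_Derive_div_sin.
    + intros x Hx. apply continuous_Rmult_fun; [now apply continuous_astig|].
      apply continuous_Rinv_fun; [apply continuous_sin | generalize (sin_pos_0_PI x Hx); lra].
    + now apply Derive_div_sin_at_right_0.
Qed.

Lemma is_series_Ferrers_primitive_cos :
  is_series (fun k => Ferrers_primitive_cos (S k) t)
    (r1 r t - r1 r 0 - gamma 0%nat * (sinp (2 * n + 2) t / (2 * n + 2))).
Proof.
  apply (is_series_of_lim_sum_n_m_1 (fun m => Ferrers_primitive_cos m t)).
  apply (is_lim_seq_weighted_RInt_gen scaled_astig Ferrers_partial_sum weight_cos t _
    sinp_integral); auto using sinp_integral_ge_0, continuous_scaled_astig,
    continuous_Ferrers_partial_sum, continuous_weight_cos, is_RInt_gen_scaled_astig_weight_cos,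
    is_RInt_gen_partial_sum_weight_cos.
  apply RInt_sq_div_sin_le_sinp_integral;
    [apply continuous_weight_cos | apply weight_cos_sq_div_sin_le].
Qed.

Lemma is_series_Ferrers_primitive :
  is_series (fun k => Ferrers_primitive (S k) t)
    (Derive r t / sin t - D2 r 0 - gamma 0%nat * sinp_integral).
Proof.
  apply (is_series_of_lim_sum_n_m_1 (fun m => Ferrers_primitive m t)).
  apply (is_lim_seq_weighted_RInt_gen scaled_astig Ferrers_partial_sum weight t _ sinp_integral);
    auto using sinp_integral_ge_0, continuous_scaled_astig, continuous_Ferrers_partial_sum,
      continuous_weight, is_RInt_gen_scaled_astig_weight, is_RInt_gen_partial_sum_weight.
  apply RInt_sq_div_sin_le_sinp_integral; [apply continuous_weight |].
  intros x Hx. right. now apply weight_sq_div_sin.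
Qed.

Lemma is_series_r1_Ferrers :
  is_series (fun m => gamma (S m) * (FerrersP (- (n + 2)) (n + INR (S m)) (cos t)
                                     + cot t * FerrersP (- (n + 1)) (n + INR (S m)) (cos t)))
    (/ sinp (n + 2) t * (r1 r t - r1 r 0 - gamma 0%nat * (sinp (2 * n + 2) t / (2 * n + 2)))).
Proof.
  generalize (is_series_scal_l (/ sinp (n + 2) t) _ _ is_series_Ferrers_primitive_cos).
  apply is_series_ext. intros k. unfold Ferrers_primitive_cos, sinFerrers, cot.
  set (nu := n + INR (S k)). unfold scal; simpl; unfold mult; simpl.
  replace (n + 2) with (n + 1 + 1) by ring. rewrite sinp_succ by exact t_in.
  generalize (sinp_pos (n + 1) t) (sin_pos_0_PI t t_in). intros. field. lra.
Qed.

Lemma is_series_r_Ferrers :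
  is_series (fun m => gamma (S m) * FerrersP (- (n + 2)) (n + INR (S m)) (cos t))
    (/ sinp (n + 2) t * (r1 r t - r1 r 0 - gamma 0%nat * (sinp (2 * n + 2) t / (2 * n + 2))
      - cos t * (Derive r t / sin t - D2 r 0 - gamma 0%nat * sinp_integral))).
Proof.
  generalize (is_series_scal_l (/ sinp (n + 2) t) _ _ (is_series_minus _ _ _ _
    is_series_Ferrers_primitive_cos (is_series_scal_l (cos t) _ _ is_series_Ferrers_primitive))).
  apply is_series_ext. intros k. unfold Ferrers_primitive_cos, Ferrers_primitive, sinFerrers.
  set (nu := n + INR (S k)). unfold scal, plus, opp; simpl; unfold mult; simpl.
  generalize (sinp_pos (n + 2) t). intros. field. lra.
Qed.

End At_t.
End Expansion.


Theorem theorem5p8 (n : R) (r : R -> R) (gamma : nat -> R) :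
  -1 < n < 1 ->
  in_W r ->
  L2sin (fun t => astig r t / sinp (n + 2) t) ->
  L2sin_lim
    (fun M t => gamma 0%nat * sinp n t
                + sum_n_m (fun m => gamma m * FerrersP (- n) (n + INR m) (cos t)) 1 M)
    (fun t => astig r t / sinp (n + 2) t) ->
  let C1 := r1 r 0 in
  let C2 := r 0 - r1 r 0 in
  forall t : R, 0 < t < PI ->
    ex_series (fun m => gamma (S m) *
        (FerrersP (- (n + 2)) (n + INR (S m)) (cos t)
         + cot t * FerrersP (- (n + 1)) (n + INR (S m)) (cos t))) /\
    r1 r t = C1 + gamma 0%nat / (2 * (n + 1)) * sinp (2 * n + 2) t
             + sinp (n + 2) t * Series (fun m => gamma (S m) *
                 (FerrersP (- (n + 2)) (n + INR (S m)) (cos t)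
                  + cot t * FerrersP (- (n + 1)) (n + INR (S m)) (cos t))) /\
    ex_series (fun m => gamma (S m) * FerrersP (- (n + 2)) (n + INR (S m)) (cos t)) /\
    r t = C2 * cos t + C1
          + gamma 0%nat * (sinp (2 * n + 2) t / (2 * (n + 1))
               - cos t * RInt_gen (fun u => sinp (2 * n + 1) u) (at_right 0) (at_point t))
          + sinp (n + 2) t * Series (fun m => gamma (S m) * FerrersP (- (n + 2)) (n + INR (S m)) (cos t)).
Proof.
  intros Hn HW _ HL2 C1 C2 t Ht. unfold C1, C2.
  destruct HW as (Hd1 & Hd2 & Hc2 & Heven & _).
  destruct (ex_is_RInt_gen_sinp (2 * n + 1) t ltac:(lra) Ht) as [I HI].
  assert (S1 := is_series_r1_Ferrers n gamma ltac:(lra) r Hd1 Hd2 Hc2 Heven HL2 t Ht I HI).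
  assert (S3 := is_series_r_Ferrers n gamma ltac:(lra) r Hd1 Hd2 Hc2 Heven HL2 t Ht I HI).
  rewrite (is_RInt_gen_unique (V := R_CompleteNormedModule) (fun u => sinp (2 * n + 1) u) I HI).
  rewrite (is_series_unique _ _ S1), (is_series_unique _ _ S3).
  rewrite (r_eq_r1_Derive_div_sin r t Ht), (r1_0 r).
  generalize (sinp_pos (n + 2) t) (sin_pos_0_PI t Ht). intros.
  split; [eexists; exact S1 | split; [field; lra | split; [eexists; exact S3 | field; lra]]].
Qed.
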